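(* Let $(\mathcal{A},\otimes,I,\gamma)$ be a braided monoidal category such that $I$ is a regular generator of $\mathcal{A}$ and such that for every object $X$ the functors $-\otimes X$ and $X\otimes -$ preserve colimits. Let $B=(B,m_B,u_B)$ be an algebra in $\mathcal{A}$ and let $\mathcal{A}_B$ be the category of right $B$-modules in $\mathcal{A}$. There is a bijective correspondence between (1) monoidal structures on $\mathcal{A}_B$ such that the forgetful functor $\mathcal{A}_B\to\mathcal{A}$ is strict monoidal, and (2) bialgebra structures $(B,m_B,u_B,\Delta_B,\varepsilon_B)$ on $B$ (with the given underlying algebra).
   Context: Monoidal categories are treated as strict. A right $B$-module is an object $M$ with $\rho_M:M\otimes B\to M$ satisfying $\rho_M\circ(\rho_M\otimes B)=\rho_M\circ(M\otimes m_B)$ and $\rho_M\circ(M\otimes u_B)=\mathrm{id}_M$; morphisms are $\mathcal{A}$-morphisms commuting with actions. A bialgebra in the braided category is an algebra $(B,m,u)$ with a coalgebra structure $(B,\Delta,\epsilon)$ such that $\Delta\circ m=(m\otimes m)\circ(B\otimes\gamma_{B,B}\otimes B)\circ(\Delta\otimes\Delta)$, $\epsilon\circ u=\mathrm{id}_I$, $\Delta\circ u=u\otimes u$, $\epsilon\circ m=\epsilon\otimes\epsilon$. An object $G$ is a regular generator if for every $X$, with $f_X:\coprod_{f:G\to X}G\to X$ the canonical morphism, the fork formed by $f_X$ and the two canonical morphisms $\coprod_{(g,h)}G\rightrightarrows\coprod_{f:G\to X}G$ (indexed by pairs $g,h:G\to\coprod_{f:G\to X}G$ with $f_X\circ g=f_X\circ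 h$) is a coequalizer. A functor is strict monoidal if it preserves tensor products and unit on the nose, with identity structure maps. *)

From Stdlib Require Import ProofIrrelevance.

Record Cat := {
  ob :> Type;
  hom : ob -> ob -> Type;
  idm : forall a, hom a a;
  comp : forall a b c, hom b c -> hom a b -> hom a c;
  comp_idl : forall a b (f : hom a b), comp a b b (idm b) f = f;
  comp_idr : forall a b (f : hom a b), comp a a b f (idm a) = f;
  comp_assoc : forall a b c d (f : hom a b) (g : hom b c) (h : hom c d),
    comp a c d h (comp a b c g f) = comp a b d (comp b c d h g) f }.

Arguments hom {_} _ _.
Arguments idm {_} _.
Arguments comp {_ _ _ _} _ _.
Arguments comp_idl {_ _ _} _.
Arguments comp_idr {_ _ _} _.
Arguments comp_assoc {_ _ _ _ _} _ _ _.

Notation "g ∘ f" := (comp g f) (at level 40, left associativity).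

Definition cast {C : Cat} {a b : C} (e : a = b) : hom a b :=
  match e in (_ = y) return hom a y with eq_refl => idm a end.

Record Functor (J C : Cat) := {
  fob : J -> C;
  fhom : forall i j : J, hom i j -> hom (fob i) (fob j);
  fhom_id : forall i, fhom i i (idm i) = idm (fob i);
  fhom_comp : forall i j k (u : hom i j) (v : hom j k),
      fhom i k (v ∘ u) = fhom j k v ∘ fhom i j u }.
Arguments fob {_ _} _ _.
Arguments fhom {_ _} _ {_ _} _.

Record SMC (C : Cat) := {
  tob : C -> C -> C;
  thom : forall a b c d : C, hom a b -> hom c d -> hom (tob a c) (tob b d);
  tI : C;
  thom_id : forall a c : C, thom a a c c (idm a) (idm c) = idm (tob a c);
  thom_comp : forall (a b c a' b' c' : C) (f : hom a b) (g : hom b c)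
      (f' : hom a' b') (g' : hom b' c'),
      thom a c a' c' (g ∘ f) (g' ∘ f') = thom b c b' c' g g' ∘ thom a b a' b' f f';
  tassoc : forall a b c : C, tob (tob a b) c = tob a (tob b c);
  tunitl : forall a : C, tob tI a = a;
  tunitr : forall a : C, tob a tI = a;
  thom_assoc : forall (a a' b b' c c' : C) (f : hom a a') (g : hom b b') (h : hom c c'),
      cast (tassoc a' b' c') ∘ thom _ _ _ _ (thom _ _ _ _ f g) h
      = thom _ _ _ _ f (thom _ _ _ _ g h) ∘ cast (tassoc a b c);
  thom_unitl : forall (a a' : C) (f : hom a a'),
      cast (tunitl a') ∘ thom _ _ _ _ (idm tI) f = f ∘ cast (tunitl a);
  thom_unitr : forall (a a' : C) (f : hom a a'),
      cast (tunitr a') ∘ thom _ _ _ _ f (idm tI) = f ∘ cast (tunitr a) }.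

Arguments tob {_} _ _ _.
Arguments thom {_} _ {_ _ _ _} _ _.
Arguments tI {_} _.
Arguments tassoc {_} _ _ _ _.
Arguments tunitl {_} _ _.
Arguments tunitr {_} _ _.

Record Braiding (A : Cat) (T : SMC A) := {
  br : forall a b : A, hom (tob T a b) (tob T b a);
  br_nat : forall (a a' b b' : A) (f : hom a a') (g : hom b b'),
      br a' b' ∘ thom T f g = thom T g f ∘ br a b;
  br_iso : forall a b : A, exists g : hom (tob T b a) (tob T a b),
      g ∘ br a b = idm _ /\ br a b ∘ g = idm _;
  br_hex1 : forall a b c : A,
      br a (tob T b c)
      = cast (eq_sym (tassoc T b c a)) ∘ thom T (idm b) (br a c)
        ∘ cast (tassoc T b a c) ∘ thom T (br a b) (idm c)
        ∘ cast (eq_sym (tassoc T a b c));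
  br_hex2 : forall a b c : A,
      br (tob T a b) c
      = cast (tassoc T c a b) ∘ thom T (br a c) (idm b)
        ∘ cast (eq_sym (tassoc T a c b)) ∘ thom T (idm a) (br b c)
        ∘ cast (tassoc T a b c) }.
Arguments br {_ _} _ _ _.

Definition IsColimit {J C : Cat} (F : J -> C)
    (Fh : forall i j : J, hom i j -> hom (F i) (F j))
    (L : C) (cc : forall j, hom (F j) L) : Prop :=
  (forall (i j : J) (u : hom i j), cc j ∘ Fh i j u = cc i) /\
  (forall (Y : C) (c : forall j, hom (F j) Y),
      (forall (i j : J) (u : hom i j), c j ∘ Fh i j u = c i) ->
      exists! h : hom L Y, forall j, h ∘ cc j = c j).

Definition PreservesColimits {C D : Cat} (G : C -> D)
    (Gh : forall a b : C, hom a b -> hom (G a) (G b)) : Prop :=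
  forall (J : Cat) (Fd : Functor J C) (L : C) (cc : forall j, hom (fob Fd j) L),
    IsColimit (fob Fd) (fun i j u => fhom Fd u) L cc ->
    IsColimit (fun j => G (fob Fd j)) (fun i j u => Gh _ _ (fhom Fd u))
              (G L) (fun j => Gh _ _ (cc j)).

Definition IsCoproduct {C : Cat} {K : Type} (F : K -> C) (P : C)
    (inj : forall k, hom (F k) P) : Prop :=
  forall (Y : C) (g : forall k, hom (F k) Y),
    exists! h : hom P Y, forall k, h ∘ inj k = g k.

Definition IsCoequalizer {C : Cat} {a b : C} (p q : hom a b) (c : C) (e : hom b c) : Prop :=
  e ∘ p = e ∘ q /\
  (forall (Y : C) (k : hom b Y), k ∘ p = k ∘ q -> exists! h : hom c Y, h ∘ e = k).

Definition PairIdx {C : Cat} {G S X : C} (fX : hom S X) : Type :=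
  { gh : hom G S * hom G S | fX ∘ fst gh = fX ∘ snd gh }.

Definition RegularGenerator {C : Cat} (G : C) : Prop :=
  forall X : C,
    exists (S : C) (inj : forall f : hom G X, hom G S),
      IsCoproduct (fun _ : hom G X => G) S inj /\
      forall fX : hom S X, (forall f, fX ∘ inj f = f) ->
        exists (P : C) (inj2 : forall pr : @PairIdx C G S X fX, hom G P),
          IsCoproduct (fun _ : PairIdx fX => G) P inj2 /\
          forall p1 p2 : hom P S,
            (forall pr, p1 ∘ inj2 pr = fst (proj1_sig pr)) ->
            (forall pr, p2 ∘ inj2 pr = snd (proj1_sig pr)) ->
            IsCoequalizer p1 p2 X fX.

Record MonStruct (C : Cat) := {
  mo : C -> C -> C;
  mh : forall a b c d : C, hom a b -> hom c d -> hom (mo a c) (mo b d);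
  mI : C;
  malpha : forall a b c : C, hom (mo (mo a b) c) (mo a (mo b c));
  mlam : forall a : C, hom (mo mI a) a;
  mrho : forall a : C, hom (mo a mI) a;
  mh_id : forall a c : C, mh a a c c (idm a) (idm c) = idm (mo a c);
  mh_comp : forall (a b c a' b' c' : C) (f : hom a b) (g : hom b c)
      (f' : hom a' b') (g' : hom b' c'),
      mh a c a' c' (g ∘ f) (g' ∘ f') = mh b c b' c' g g' ∘ mh a b a' b' f f';
  malpha_nat : forall (a a' b b' c c' : C) (f : hom a a') (g : hom b b') (h : hom c c'),
      malpha a' b' c' ∘ mh _ _ _ _ (mh _ _ _ _ f g) h
      = mh _ _ _ _ f (mh _ _ _ _ g h) ∘ malpha a b c;
  mlam_nat : forall (a a' : C) (f : hom a a'),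
      mlam a' ∘ mh _ _ _ _ (idm mI) f = f ∘ mlam a;
  mrho_nat : forall (a a' : C) (f : hom a a'),
      mrho a' ∘ mh _ _ _ _ f (idm mI) = f ∘ mrho a;
  malpha_iso : forall a b c : C, exists g : hom (mo a (mo b c)) (mo (mo a b) c),
      g ∘ malpha a b c = idm _ /\ malpha a b c ∘ g = idm _;
  mlam_iso : forall a : C, exists g : hom a (mo mI a),
      g ∘ mlam a = idm _ /\ mlam a ∘ g = idm _;
  mrho_iso : forall a : C, exists g : hom a (mo a mI),
      g ∘ mrho a = idm _ /\ mrho a ∘ g = idm _;
  pentagon : forall a b c d : C,
      mh _ _ _ _ (idm a) (malpha b c d) ∘ malpha a (mo b c) d
        ∘ mh _ _ _ _ (malpha a b c) (idm d)
      = malpha a b (mo c d) ∘ malpha (mo a b) c d;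
  triangle : forall a b : C,
      mh _ _ _ _ (idm a) (mlam b) ∘ malpha a mI b = mh _ _ _ _ (mrho a) (idm b) }.

Arguments mo {_} _ _ _.
Arguments mh {_} _ {_ _ _ _} _ _.
Arguments mI {_} _.
Arguments malpha {_} _ _ _ _.
Arguments mlam {_} _ _.
Arguments mrho {_} _ _.

(* U : (C, M) -> (A, T) is strict monoidal: it preserves tensor and unit on
   the nose and all structure maps are identities (i.e. the canonical
   identifications [cast]). *)
Definition IsStrictMonoidalFunctor {C A : Cat} (M : MonStruct C) (T : SMC A)
    (U : Functor C A) : Prop :=
  exists (eo : forall a b : C, fob U (mo M a b) = tob T (fob U a) (fob U b))
         (eI : fob U (mI M) = tI T),
    (forall (a b c d : C) (f : hom a b) (g : hom c d),
        cast (eo b d) ∘ fhom U (mh M f g) = thom T (fhom U f) (fhom U g) ∘ cast (eo a c)) /\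
    (forall a b c : C,
        cast (eq_trans (eo a (mo M b c)) (f_equal (fun x => tob T (fob U a) x) (eo b c)))
          ∘ fhom U (malpha M a b c)
        = cast (tassoc T (fob U a) (fob U b) (fob U c))
          ∘ cast (eq_trans (eo (mo M a b) c) (f_equal (fun x => tob T x (fob U c)) (eo a b)))) /\
    (forall a : C,
        fhom U (mlam M a)
        = cast (tunitl T (fob U a))
          ∘ cast (eq_trans (eo (mI M) a) (f_equal (fun x => tob T x (fob U a)) eI))) /\
    (forall a : C,
        fhom U (mrho M a)
        = cast (tunitr T (fob U a))
          ∘ cast (eq_trans (eo a (mI M)) (f_equal (fun x => tob T (fob U a) x) eI))).

Section Modules.
Variables (A : Cat) (T : SMC A) (B : A) (mB : hom (tob T B B) B) (uB : hom (tI T) B).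

Definition IsAlgebra : Prop :=
  mB ∘ thom T mB (idm B) = mB ∘ thom T (idm B) mB ∘ cast (tassoc T B B B) /\
  mB ∘ thom T uB (idm B) = cast (tunitl T B) /\
  mB ∘ thom T (idm B) uB = cast (tunitr T B).

Definition IsRightModule (M : A) (rho : hom (tob T M B) M) : Prop :=
  rho ∘ thom T rho (idm B) = rho ∘ thom T (idm M) mB ∘ cast (tassoc T M B B) /\
  rho ∘ thom T (idm M) uB = cast (tunitr T M).

Record RMod := { rm_ob : A; rm_act : hom (tob T rm_ob B) rm_ob;
                 rm_ax : IsRightModule rm_ob rm_act }.

Definition IsModMor (M N : RMod) (f : hom (rm_ob M) (rm_ob N)) : Prop :=
  f ∘ rm_act M = rm_act N ∘ thom T f (idm B).

Record ModMor (M N : RMod) := { mm_hom : hom (rm_ob M) (rm_ob N);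
                                mm_ax : IsModMor M N mm_hom }.
Arguments mm_hom {M N} _.

Lemma ModMor_eq (M N : RMod) (f g : ModMor M N) : mm_hom f = mm_hom g -> f = g.
Proof.
  destruct f as [f hf], g as [g hg]; simpl; intros ->.
  f_equal; apply proof_irrelevance.
Qed.

Definition mod_id (M : RMod) : ModMor M M.
Proof.
  refine {| mm_hom := idm (rm_ob M) |}.
  unfold IsModMor. rewrite thom_id, comp_idl, comp_idr. reflexivity.
Defined.

Definition mod_comp (M N P : RMod) (g : ModMor N P) (f : ModMor M N) : ModMor M P.
Proof.
  refine {| mm_hom := mm_hom g ∘ mm_hom f |}.
  unfold IsModMor.
  destruct f as [f hf], g as [g hg]; unfold IsModMor in *; simpl.
  rewrite <- comp_assoc, hf, comp_assoc, hg, <- comp_assoc.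
  rewrite <- thom_comp, comp_idl. reflexivity.
Defined.

Definition ModCat : Cat.
Proof.
  refine {| ob := RMod; hom := ModMor; idm := mod_id; comp := mod_comp |}.
  - intros a b f; apply ModMor_eq; simpl; apply comp_idl.
  - intros a b f; apply ModMor_eq; simpl; apply comp_idr.
  - intros a b c d f g h; apply ModMor_eq; simpl; apply comp_assoc.
Defined.

Definition Forget : Functor ModCat A.
Proof.
  refine {| fob := (rm_ob : ModCat -> A);
            fhom := fun (M N : ModCat) (f : hom M N) => mm_hom f |};
  reflexivity.
Defined.

Definition ModMonStr : Type :=
  { M : MonStruct ModCat | IsStrictMonoidalFunctor M T Forget }.

Variable Br : Braiding A T.

Definition e4 (X Y Z W : A) :
    tob T (tob T X Y) (tob T Z W) = tob T (tob T X (tob T Y Z)) W :=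
  eq_trans (eq_sym (tassoc T (tob T X Y) Z W))
           (f_equal (fun x => tob T x W) (tassoc T X Y Z)).

Definition IsBialgebra (D : hom B (tob T B B)) (eps : hom B (tI T)) : Prop :=
  thom T D (idm B) ∘ D = cast (eq_sym (tassoc T B B B)) ∘ thom T (idm B) D ∘ D /\
  thom T eps (idm B) ∘ D = cast (eq_sym (tunitl T B)) /\
  thom T (idm B) eps ∘ D = cast (eq_sym (tunitr T B)) /\
  D ∘ mB = thom T mB mB ∘ cast (eq_sym (e4 B B B B))
             ∘ thom T (thom T (idm B) (br Br B B)) (idm B)
             ∘ cast (e4 B B B B) ∘ thom T D D /\
  eps ∘ uB = idm (tI T) /\
  D ∘ uB = thom T uB uB ∘ cast (eq_sym (tunitl T (tI T))) /\
  eps ∘ mB = cast (tunitl T (tI T)) ∘ thom T eps eps.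

Definition BialgStr : Type :=
  { p : hom B (tob T B B) * hom B (tI T) | IsBialgebra (fst p) (snd p) }.

Definition tensor_action (M N : RMod) (D : hom B (tob T B B)) :
    hom (tob T (tob T (rm_ob M) (rm_ob N)) B) (tob T (rm_ob M) (rm_ob N)) :=
  thom T (rm_act M) (rm_act N) ∘ cast (eq_sym (e4 (rm_ob M) B (rm_ob N) B))
    ∘ thom T (thom T (idm (rm_ob M)) (br Br (rm_ob N) B)) (idm B)
    ∘ cast (e4 (rm_ob M) (rm_ob N) B B)
    ∘ thom T (idm (tob T (rm_ob M) (rm_ob N))) D.

Definition Corresponds (s : ModMonStr) (x : BialgStr) : Prop :=
  (forall (M N : RMod)
          (e : rm_ob (mo (proj1_sig s) M N) = tob T (rm_ob M) (rm_ob N)),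
      cast e ∘ rm_act (mo (proj1_sig s) M N)
      = tensor_action M N (fst (proj1_sig x)) ∘ cast (f_equal (fun z => tob T z B) e)) /\
  (forall e : rm_ob (mI (proj1_sig s)) = tI T,
      cast e ∘ rm_act (mI (proj1_sig s))
      = snd (proj1_sig x) ∘ cast (tunitl T B) ∘ cast (f_equal (fun z => tob T z B) e)).

End Modules.

(* Since the unit I is a regular generator and each [- ⊗ X] preserves colimits,
   a morphism out of [X ⊗ Z] is determined by its composites with [p ⊗ Z] for
   the points [p : I -> X].  A point [x] of a right B-module X yields the module
   map [x·- : B -> X] (the orbit map), and on points the action of [M ⊗ N]
   induced by a comultiplication Δ becomes [(x·- ⊗ y·-) ∘ Δ].  Testing on points
   therefore turns the module axioms of [M ⊗ N] and of I, and the B-linearity of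
   the coherence isomorphisms, into the bialgebra axioms, and conversely.
   Given a monoidal structure lifting that of A, Δ is the action of [B ⊗ B]
   evaluated at [u ⊗ u] and ε is the action of I; since the action of [M ⊗ N] is
   natural in the module maps [x·-] and [y·-], it is the one induced by Δ. *)

From Stdlib Require Import ProofIrrelevance FunctionalExtensionality.

Lemma sig_eq {X : Type} (P : X -> Prop) (x y : sig P) : proj1_sig x = proj1_sig y -> x = y.
Proof. destruct x, y. simpl. intros ->. f_equal. apply proof_irrelevance. Qed.

(** * Transport along equalities of objects *)

Section Casts.
Context {C : Cat}.

Lemma cast_idm (a : C) (e : a = a) : cast e = idm a.
Proof. rewrite (proof_irrelevance _ e eq_refl). reflexivity. Qed.

Lemma cast_proof_irr (a b : C) (e e' : a = b) : cast e = cast e'.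
Proof. rewrite (proof_irrelevance _ e e'). reflexivity. Qed.

Lemma cast_comp (a b c : C) (e1 : a = b) (e2 : b = c) :
  cast e2 ∘ cast e1 = cast (eq_trans e1 e2).
Proof. destruct e1, e2. simpl. apply comp_idl. Qed.

Lemma cast_compK (a b c d : C) (f : hom d a) (e1 : a = b) (e2 : b = c) :
  cast e2 ∘ (cast e1 ∘ f) = cast (eq_trans e1 e2) ∘ f.
Proof. rewrite comp_assoc, cast_comp. reflexivity. Qed.

Lemma cast_inv1 {a b : C} (e : a = b) : cast (eq_sym e) ∘ cast e = idm a.
Proof. rewrite cast_comp. apply cast_idm. Qed.

Lemma cast_inv2 {a b : C} (e : a = b) : cast e ∘ cast (eq_sym e) = idm b.
Proof. rewrite cast_comp. apply cast_idm. Qed.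

Lemma cast_cancel_r {a b c : C} (f g : hom b c) (e : a = b) : f ∘ cast e = g ∘ cast e -> f = g.
Proof. destruct e. simpl. rewrite !comp_idr. auto. Qed.

Lemma compK {a b b' c x : C} (f : hom a b) (g : hom b c) (f' : hom a b') (g' : hom b' c) (h : hom x a) :
  g ∘ f = g' ∘ f' -> g ∘ (f ∘ h) = g' ∘ (f' ∘ h).
Proof. intros H. rewrite !comp_assoc, H. reflexivity. Qed.

Lemma idempotent_linv_id {a : C} (g h : hom a a) : g ∘ g = g -> h ∘ g = idm a -> g = idm a.
Proof.
  intros Hgg Hhg. transitivity (h ∘ g ∘ g).
  - rewrite Hhg, comp_idl. reflexivity.
  - rewrite <- comp_assoc, Hgg. exact Hhg.
Qed.

(* The strict monoidal structure identifies objects such as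
   [(a ⊗ b) ⊗ c] and [a ⊗ (b ⊗ c)] only propositionally, so its coherence
   diagrams are compared with [heq] rather than [=]. *)
Definition heq {a b a' b' : C} (f : hom a b) (g : hom a' b') : Prop :=
  exists (e1 : a = a') (e2 : b = b'), cast e2 ∘ f = g ∘ cast e1.

Lemma heq_eq {a b : C} (f g : hom a b) : heq f g -> f = g.
Proof.
  intros [e1 [e2 H]]. rewrite !cast_idm, comp_idl, comp_idr in H. exact H.
Qed.

Lemma eq_heq {a b : C} (f g : hom a b) : f = g -> heq f g.
Proof. intros ->. exists eq_refl, eq_refl. simpl. rewrite comp_idl, comp_idr. reflexivity. Qed.

Lemma heq_refl {a b : C} (f : hom a b) : heq f f.
Proof. apply eq_heq; reflexivity. Qed.

Lemma heq_sym {a b a' b' : C} (f : hom a b) (g : hom a' b') : heq f g -> heq g f.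
Proof.
  intros [e1 [e2 H]]. subst. simpl in H. rewrite comp_idl, comp_idr in H. subst.
  apply heq_refl.
Qed.

Lemma heq_trans {a b a' b' a'' b'' : C} (f : hom a b) (g : hom a' b') (h : hom a'' b'') :
  heq f g -> heq g h -> heq f h.
Proof.
  intros [e1 [e2 H]] [e3 [e4 H']]. subst. simpl in *.
  rewrite comp_idl, comp_idr in H. rewrite comp_idl, comp_idr in H'. subst. apply heq_refl.
Qed.

Lemma heq_comp {a b c a' b' c' : C} (f : hom a b) (g : hom b c) (f' : hom a' b') (g' : hom b' c') :
  heq f f' -> heq g g' -> heq (g ∘ f) (g' ∘ f').
Proof.
  intros [e1 [e2 H]] [e3 [e4 H']]. subst. simpl in *.
  rewrite comp_idl, comp_idr in H. subst.
  rewrite cast_idm, comp_idr, comp_idl in H'. subst. apply heq_refl.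
Qed.

Lemma heq_idm {a b : C} (e : a = b) : heq (idm a) (idm b).
Proof. destruct e; apply heq_refl. Qed.

Lemma heq_cast {a b : C} (e : a = b) : heq (cast e) (idm a).
Proof. destruct e. apply heq_refl. Qed.

Lemma heq_cast' {a b : C} (e : a = b) : heq (cast e) (idm b).
Proof. destruct e. apply heq_refl. Qed.

Lemma heq_castl {a b c a' b' : C} (f : hom a b) (e : b = c) (g : hom a' b') :
  heq f g -> heq (cast e ∘ f) g.
Proof. intros H. destruct e. simpl. rewrite comp_idl. exact H. Qed.

Lemma heq_castr {a b c a' b' : C} (f : hom b c) (e : a = b) (g : hom a' b') :
  heq f g -> heq (f ∘ cast e) g.
Proof. intros H. destruct e. simpl. rewrite comp_idr. exact H. Qed.

Lemma heq_castl' {a b c a' b' : C} (f : hom a b) (e : b = c) (g : hom a' b') :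
  heq g f -> heq g (cast e ∘ f).
Proof. intros H. apply heq_sym, heq_castl, heq_sym, H. Qed.

Lemma heq_castr' {a b c a' b' : C} (f : hom b c) (e : a = b) (g : hom a' b') :
  heq g f -> heq g (f ∘ cast e).
Proof. intros H. apply heq_sym, heq_castr, heq_sym, H. Qed.

Lemma heq_comp_idl {a b c a' b' d : C} (g : hom b c) (f : hom a b) (f' : hom a' b') :
  heq g (idm d) -> heq f f' -> heq (g ∘ f) f'.
Proof.
  intros Hg Hf. destruct Hg as [e1 [e2 Hg]]. subst. rewrite !cast_idm, comp_idl, comp_idr in Hg. subst.
  rewrite comp_idl. exact Hf.
Qed.

Lemma heq_comp_idr {a b c b' c' d : C} (g : hom b c) (f : hom a b) (g' : hom b' c') :
  heq f (idm d) -> heq g g' -> heq (g ∘ f) g'.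
Proof.
  intros Hf Hg. destruct Hf as [e1 [e2 Hf]]. subst. rewrite !cast_idm, comp_idl, comp_idr in Hf. subst.
  rewrite comp_idr. exact Hg.
Qed.

Lemma heq_dom {a b a' b' : C} {f : hom a b} {g : hom a' b'} : heq f g -> a = a'.
Proof. intros [e1 [e2 _]]; exact e1. Qed.

Lemma heq_cod {a b a' b' : C} {f : hom a b} {g : hom a' b'} : heq f g -> b = b'.
Proof. intros [e1 [e2 _]]; exact e2. Qed.

Lemma heq_slide {a b a' b' : C} (f : hom a b) (g : hom a' b') (e1 : a = a') (e2 : b = b') :
  heq f g -> cast e2 ∘ f = g ∘ cast e1.
Proof.
  intros [e3 [e4 H]]. rewrite (proof_irrelevance _ e1 e3), (proof_irrelevance _ e2 e4). exact H.
Qed.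

Lemma heq_slide' {a b a' b' : C} {f : hom a b} {g : hom a' b'} (H : heq f g) (e2 : b = b') :
  cast e2 ∘ f = g ∘ cast (heq_dom H).
Proof. apply heq_slide, H. Qed.

Lemma heq_slide_r {a b a' b' : C} (f : hom a b) (g : hom a' b') (e1 : a' = a) (e2 : b' = b) :
  heq f g -> f ∘ cast e1 = cast e2 ∘ g.
Proof.
  intros [e3 [e4 H]]. subst. rewrite !cast_idm in *. rewrite comp_idl, comp_idr in H. subst.
  rewrite comp_idl, comp_idr. reflexivity.
Qed.

Lemma heq_slide_rK {a b a' b' x : C} (f : hom a b) (g : hom a' b') (e1 : a' = a) (e2 : b' = b)
    (h : hom x a') :
  heq f g -> f ∘ (cast e1 ∘ h) = cast e2 ∘ (g ∘ h).
Proof. intros H. rewrite !comp_assoc, (heq_slide_r f g e1 e2 H). reflexivity. Qed.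

Lemma heq_slide_rK' {a b a' b' x : C} {f : hom a b} {g : hom a' b'} (H : heq f g) (e1 : a' = a)
    (h : hom x a') :
  f ∘ (cast e1 ∘ h) = cast (eq_sym (heq_cod H)) ∘ (g ∘ h).
Proof. apply heq_slide_rK, H. Qed.

Lemma heq_casts {a b c d : C} (e1 : a = b) (e2 : c = d) (e3 : a = c) : heq (cast e1) (cast e2).
Proof. eapply heq_trans. apply heq_cast. eapply heq_trans. apply (heq_idm e3). apply heq_sym, heq_cast. Qed.

End Casts.

Section Monoidal.
Context {A : Cat} (T : SMC A).

Local Notation "a ⊗ b" := (tob T a b) (at level 30, right associativity).
Local Notation "f ⊠ g" := (thom T f g) (at level 35).

Lemma thom_compl {a b c : A} (f : hom a b) (g : hom b c) (d : A) :
  (g ∘ f) ⊠ idm d = (g ⊠ idm d) ∘ (f ⊠ idm d).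
Proof. rewrite <- thom_comp, comp_idl. reflexivity. Qed.

Lemma thom_cast {a b c d : A} (e1 : a = b) (e2 : c = d) :
  thom T (cast e1) (cast e2) = cast (f_equal2 (tob T) e1 e2).
Proof. destruct e1, e2. rewrite thom_id, cast_idm. reflexivity. Qed.

Lemma thom_idcast {a b c : A} (e : b = c) : idm a ⊠ cast e = cast (f_equal (tob T a) e).
Proof. destruct e. simpl. rewrite thom_id. reflexivity. Qed.

Lemma thom_castid {a b c : A} (e : b = c) : cast e ⊠ idm a = cast (f_equal (fun z => tob T z a) e).
Proof. destruct e. simpl. rewrite thom_id. reflexivity. Qed.

Lemma heq_thom {a b c d a' b' c' d' : A} (f : hom a b) (g : hom c d) (f' : hom a' b') (g' : hom c' d') :
  heq f f' -> heq g g' -> heq (thom T f g) (thom T f' g').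
Proof.
  intros [e1 [e2 H]] [e3 [e4 H']]. subst. simpl in *.
  rewrite comp_idl, comp_idr in H. rewrite comp_idl, comp_idr in H'. subst. apply heq_refl.
Qed.

Lemma heq_thom_id {a b c d : A} (f : hom a b) (g : hom c d) :
  heq f (idm b) -> heq g (idm d) -> heq (thom T f g) (idm (tob T b d)).
Proof. intros H1 H2. eapply heq_trans. apply (heq_thom _ _ _ _ H1 H2). rewrite thom_id. apply heq_refl. Qed.

Lemma heq_thom_casts (a b c d : A) (e1 : a = b) (e2 : c = d) : heq (cast e1 ⊠ cast e2) (idm (a ⊗ c)).
Proof. rewrite thom_cast. apply heq_cast. Qed.

Lemma heq_assoc {a b c a' b' c' : A} (f : hom a a') (g : hom b b') (h : hom c c') :
  heq (thom T (thom T f g) h) (thom T f (thom T g h)).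
Proof. exists (tassoc T a b c), (tassoc T a' b' c'). apply thom_assoc. Qed.

Lemma heq_unitl {a a' : A} (f : hom a a') : heq (thom T (idm (tI T)) f) f.
Proof. exists (tunitl T a), (tunitl T a'). apply thom_unitl. Qed.

Lemma heq_unitr {a a' : A} (f : hom a a') : heq (thom T f (idm (tI T))) f.
Proof. exists (tunitr T a), (tunitr T a'). apply thom_unitr. Qed.

Lemma heq_thom_reassoc {a b c d a' b' c' d' : A} (f : hom a a') (g : hom b b') (h : hom c c') (k : hom d d') :
  heq ((f ⊠ g) ⊠ (h ⊠ k)) ((f ⊠ (g ⊠ h)) ⊠ k).
Proof.
  eapply heq_trans. apply heq_sym, heq_assoc.
  apply heq_thom. apply heq_assoc. apply heq_refl.
Qed.

End Monoidal.

Section Braided.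
Context {A : Cat} (T : SMC A) (Br : Braiding A T).

Local Notation "a ⊗ b" := (tob T a b) (at level 30, right associativity).
Local Notation "f ⊠ g" := (thom T f g) (at level 35).
Local Notation I := (tI T).

Lemma heq_br_l (x y c : A) : x = y -> heq (br Br x c) (br Br y c).
Proof. intros e; destruct e; apply heq_refl. Qed.

(* By the hexagon identity for [I ⊗ I = I], the braiding [γ_{I,c}], transported to
   an endomorphism of c, is idempotent; being invertible, it is the identity. *)
Lemma br_unit_l (c : A) : heq (br Br (tI T) c) (idm c).
Proof.
  set (I := tI T).
  set (g := cast (tunitr T c) ∘ br Br I c ∘ cast (eq_sym (tunitl T c))).
  assert (Hg : heq (br Br I c) g).
  { unfold g. apply heq_castr', heq_castl', heq_refl. }
  assert (Hgg : g ∘ g = g).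
  { apply heq_eq.
    assert (E : heq (br Br (tob T I I) c) (br Br I c)).
    { apply heq_br_l. apply tunitl. }
    assert (H1 : heq (br Br (tob T I I) c) (g ∘ g)).
    { rewrite (br_hex2 _ _ Br I I c).
      rewrite <- !comp_assoc.
      apply heq_castl. apply heq_comp.
      - apply heq_castl. apply heq_castr. eapply heq_trans. apply heq_unitl. apply Hg.
      - eapply heq_trans. apply heq_unitr. apply Hg. }
    eapply heq_trans. apply heq_sym, H1. eapply heq_trans. apply E. exact Hg. }
  destruct (br_iso _ _ Br I c) as [h [Hh1 Hh2]].
  assert (Hg1 : g = idm c).
  { apply (idempotent_linv_id g (cast (tunitl T c) ∘ h ∘ cast (eq_sym (tunitr T c)))); auto.
    unfold g. rewrite <- !comp_assoc.
    rewrite (comp_assoc _ _ (cast (eq_sym (tunitr T c)))), cast_comp, cast_idm, comp_idl.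
    rewrite (comp_assoc _ _ h), Hh1, comp_idl, cast_comp, cast_idm. reflexivity. }
  rewrite <- Hg1. exact Hg.
Qed.

Definition mid_swap (a b c d : A) : hom ((a ⊗ b) ⊗ (c ⊗ d)) ((a ⊗ c) ⊗ (b ⊗ d)) :=
  cast (eq_sym (e4 A T a c b d)) ∘ ((idm a ⊠ br Br b c) ⊠ idm d) ∘ cast (e4 A T a b c d).

Lemma mid_swap_nat {a b c d a' b' c' d' : A} (f : hom a a') (g : hom b b') (h : hom c c') (k : hom d d') :
  ((f ⊠ h) ⊠ (g ⊠ k)) ∘ mid_swap a b c d = mid_swap a' b' c' d' ∘ ((f ⊠ g) ⊠ (h ⊠ k)).
Proof.
  unfold mid_swap. rewrite <- !comp_assoc.
  rewrite (heq_slide_rK' (heq_thom_reassoc T f h g k)).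
  assert (Hm : ((f ⊠ (h ⊠ g)) ⊠ k) ∘ ((idm a ⊠ br Br b c) ⊠ idm d)
             = ((idm a' ⊠ br Br b' c') ⊠ idm d') ∘ ((f ⊠ (g ⊠ h)) ⊠ k)).
  { rewrite <- !thom_comp, !comp_idl, !comp_idr, br_nat. reflexivity. }
  rewrite (compK _ _ _ _ _ Hm).
  rewrite (cast_proof_irr _ _ (eq_sym (heq_cod _)) (eq_sym (e4 A T a' c' b' d'))). f_equal. f_equal.
  apply heq_slide_r. apply heq_sym, heq_thom_reassoc.
Qed.

Lemma mid_swap_unit (a b : A) : heq (mid_swap I I a b) (idm (a ⊗ b)).
Proof.
  unfold mid_swap. apply heq_castr, heq_castl.
  eapply heq_trans. apply heq_thom. apply heq_thom. apply heq_refl. apply br_unit_l. apply heq_refl.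
  rewrite !thom_id. apply heq_idm. apply (f_equal (fun z => z ⊗ b) (tunitl T a)).
Qed.

End Braided.

(** * Testing morphisms on points of the unit *)

Definition Discrete (K : Type) : Cat.
Proof.
  refine {| ob := K; hom := fun i j => i = j; idm := fun i => eq_refl;
            comp := fun a b c g f => eq_trans f g |}.
  - intros a b f. destruct f. reflexivity.
  - intros a b f. destruct f. reflexivity.
  - intros a b c d f g h. destruct f, g, h. reflexivity.
Defined.

Definition ConstFunctor {C : Cat} (K : Type) (x : C) : Functor (Discrete K) C.
Proof.
  refine {| fob := fun _ => x; fhom := fun i j u => idm x |}.
  - reflexivity.
  - intros. rewrite comp_idl. reflexivity.
Defined.

Definition ParallelPair_hom (i j : bool) : Type :=
  match i, j with
  | false, false => unit | true, true => unit | false, true => bool | true, false => Empty_set end.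

Definition ParallelPair_id (i : bool) : ParallelPair_hom i i := match i with false => tt | true => tt end.

Definition ParallelPair_comp (a b c : bool) :
    ParallelPair_hom b c -> ParallelPair_hom a b -> ParallelPair_hom a c :=
  match a, b, c with
  | false, false, false => fun _ _ => tt
  | false, false, true => fun g _ => g
  | false, true, true => fun _ f => f
  | true, true, true => fun _ _ => tt
  | true, true, false => fun g _ => match g with end
  | true, false, _ => fun _ f => match f with end
  | false, true, false => fun g _ => match g with end
  end.

Definition ParallelPair : Cat.
Proof.
  refine {| ob := bool; hom := ParallelPair_hom; idm := ParallelPair_id; comp := ParallelPair_comp |}.
  - intros [|] [|] f; simpl in *; try destruct f; reflexivity.
  - intros [|] [|] f; simpl in *; try destruct f; reflexivity.
  - intros [|] [|] [|] [|] f g h; simpl in *; try destruct f; try destruct g; try destruct h; reflexivity.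
Defined.

Section ParallelF.
Context {C : Cat} {P S : C} (p1 p2 : hom P S).

Definition ParallelF_ob (i : bool) : C := if i then S else P.

Definition ParallelF_hom (i j : bool) : ParallelPair_hom i j -> hom (ParallelF_ob i) (ParallelF_ob j) :=
  match i, j with
  | false, false => fun _ => idm P
  | true, true => fun _ => idm S
  | false, true => fun b => if b then p1 else p2
  | true, false => fun u => match u with end
  end.

Definition ParallelF : Functor ParallelPair C.
Proof.
  refine (@Build_Functor ParallelPair C ParallelF_ob ParallelF_hom _ _).
  - intros [|]; reflexivity.
  - intros [|] [|] [|] u v; simpl in *; try destruct u; try destruct v; simpl;
      rewrite ?comp_idl, ?comp_idr; reflexivity.
Defined.

End ParallelF.

Section Colimits.
Context {C : Cat}.

Lemma colimit_hom_ext {J : Cat} (F : J -> C) (Fh : forall i j : J, hom i j -> hom (F i) (F j))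
    (L : C) (cc : forall j, hom (F j) L) (Y : C) (h h' : hom L Y) :
  IsColimit F Fh L cc -> (forall j, h ∘ cc j = h' ∘ cc j) -> h = h'.
Proof.
  intros [Hcocone Huniv] Hhh'.
  destruct (Huniv Y (fun j => h ∘ cc j)) as [m [_ Hm]].
  - intros i j u. rewrite <- comp_assoc, Hcocone. reflexivity.
  - transitivity m; [symmetry|]; apply Hm; intros j; [reflexivity | symmetry; apply Hhh'].
Qed.

Lemma copower_colimit {K : Type} (x P : C) (inj : K -> hom x P) :
  IsCoproduct (fun _ => x) P inj ->
  IsColimit (fob (ConstFunctor K x)) (fun i j u => fhom (ConstFunctor K x) u) P inj.
Proof.
  intros Hcop. split.
  - intros i j u. destruct u. apply comp_idr.
  - intros Y c _. apply Hcop.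
Qed.

Lemma coequalizer_colimit {P S X : C} (p1 p2 : hom P S) (e : hom S X) :
  IsCoequalizer p1 p2 X e ->
  IsColimit (fob (ParallelF p1 p2)) (fun i j u => fhom (ParallelF p1 p2) u) X
    (fun j => if j as b return hom (ParallelF_ob b) X then e else e ∘ p1).
Proof.
  intros [Hep Huniv]. split.
  - intros [|] [|] u; simpl in *; try destruct u; simpl; rewrite ?comp_idr; auto.
  - intros Y c Hc.
    assert (Hc1 : c true ∘ p1 = c false) by exact (Hc false true true).
    assert (Hc2 : c true ∘ p2 = c false) by exact (Hc false true false).
    destruct (Huniv Y (c true)) as [m [Hm Hmu]].
    { transitivity (c false); [exact Hc1 | symmetry; exact Hc2]. }
    exists m. split.
    + intros [|]; simpl; [exact Hm | rewrite comp_assoc, Hm; exact Hc1].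
    + intros m' Hm'. apply Hmu. exact (Hm' true).
Qed.

End Colimits.

Section RegularGenerator.
Context {A : Cat} (T : SMC A).

Local Notation "a ⊗ b" := (tob T a b) (at level 30, right associativity).
Local Notation "f ⊠ g" := (thom T f g) (at level 35).
Local Notation I := (tI T).

Hypothesis HI : RegularGenerator I.
Hypothesis Hr : forall X : A,
  PreservesColimits (fun a : A => a ⊗ X) (fun a b (f : hom a b) => f ⊠ idm X).

(* X is the coequalizer of a pair of maps between coproducts of copies of I,
   and [- ⊗ Z] preserves both colimits. *)
Lemma points_jointly_epi (X Z W : A) (h h' : hom (X ⊗ Z) W) :
  (forall p : hom I X, h ∘ (p ⊠ idm Z) = h' ∘ (p ⊠ idm Z)) -> h = h'.
Proof.
  intros Hp.
  destruct (HI X) as [S [inj [Hcop Hrest]]].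
  destruct (Hcop X (fun f => f)) as [fX [HfX _]].
  destruct (Hrest fX HfX) as [P [inj2 [Hcop2 Hcoeq]]].
  destruct (Hcop2 S (fun pr => fst (proj1_sig pr))) as [p1 [Hp1 _]].
  destruct (Hcop2 S (fun pr => snd (proj1_sig pr))) as [p2 [Hp2 _]].
  assert (HS : h ∘ (fX ⊠ idm Z) = h' ∘ (fX ⊠ idm Z)).
  { eapply colimit_hom_ext. apply (Hr Z _ _ _ _ (copower_colimit _ _ _ Hcop)).
    intros f. simpl. rewrite <- !comp_assoc, <- thom_comp, comp_idl, HfX. apply Hp. }
  eapply colimit_hom_ext. apply (Hr Z _ _ _ _ (coequalizer_colimit _ _ _ (Hcoeq p1 p2 Hp1 Hp2))).
  intros [|]; simpl; [exact HS|].
  rewrite thom_compl, !comp_assoc, HS. reflexivity.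
Qed.

Lemma points_jointly_epi_cast (X Z Q W : A) (e : X ⊗ Z = Q) (h h' : hom Q W) :
  (forall p : hom I X, h ∘ cast e ∘ (p ⊠ idm Z) = h' ∘ cast e ∘ (p ⊠ idm Z)) -> h = h'.
Proof. intros H. apply (cast_cancel_r _ _ e). apply points_jointly_epi. exact H. Qed.

(* Reassociate to [X ⊗ (Y ⊗ Z)] and test on [p]; the result is a map out of
   [I ⊗ (Y ⊗ Z) = Y ⊗ Z], which is then tested on [q]. *)
Lemma points2_jointly_epi (X Y Z W : A) (h h' : hom ((X ⊗ Y) ⊗ Z) W) :
  (forall (p : hom I X) (q : hom I Y), h ∘ ((p ⊠ q) ⊠ idm Z) = h' ∘ ((p ⊠ q) ⊠ idm Z)) -> h = h'.
Proof.
  intros Hpq.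
  assert (K : h ∘ cast (eq_sym (tassoc T X Y Z)) = h' ∘ cast (eq_sym (tassoc T X Y Z))).
  { apply points_jointly_epi. intros p.
    assert (K2 : h ∘ cast (eq_sym (tassoc T X Y Z)) ∘ (p ⊠ idm (Y ⊗ Z)) ∘ cast (eq_sym (tunitl T (Y ⊗ Z)))
              = h' ∘ cast (eq_sym (tassoc T X Y Z)) ∘ (p ⊠ idm (Y ⊗ Z)) ∘ cast (eq_sym (tunitl T (Y ⊗ Z)))).
    { apply points_jointly_epi. intros q.
      assert (Hs : forall (hh : hom ((X ⊗ Y) ⊗ Z) W),
                 hh ∘ cast (eq_sym (tassoc T X Y Z)) ∘ (p ⊠ idm (Y ⊗ Z)) ∘ cast (eq_sym (tunitl T (Y ⊗ Z))) ∘ (q ⊠ idm Z)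
                 = hh ∘ ((p ⊠ q) ⊠ idm Z) ∘ cast (f_equal (fun z => z ⊗ Z) (eq_sym (tunitl T I)))).
      { intros hh. rewrite <- !comp_assoc. f_equal. apply heq_slide.
        apply (heq_trans _ ((p ⊠ idm (Y ⊗ Z)) ∘ (idm I ⊠ (q ⊠ idm Z)))).
        - apply heq_comp. apply heq_castl. apply heq_sym, heq_unitl. apply heq_refl.
        - rewrite <- thom_comp, comp_idl, comp_idr. apply heq_sym, heq_assoc. }
      rewrite !Hs, Hpq. reflexivity. }
    exact (cast_cancel_r _ _ _ K2). }
  exact (cast_cancel_r _ _ _ K).
Qed.

(* Test on points [x] of [X ⊗ Y] and [r] of [Z]; for fixed [r], the map
   [h ∘ ((id ⊗ r) ⊗ W)] is (up to [- ⊗ I = -]) a map out of [(X ⊗ Y) ⊗ W], which is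
   tested on the points [p ⊗ q]. *)
Lemma points3_jointly_epi (X Y Z W V : A) (h h' : hom (((X ⊗ Y) ⊗ Z) ⊗ W) V) :
  (forall (p : hom I X) (q : hom I Y) (r : hom I Z),
      h ∘ (((p ⊠ q) ⊠ r) ⊠ idm W) = h' ∘ (((p ⊠ q) ⊠ r) ⊠ idm W)) -> h = h'.
Proof.
  intros Hpqr. apply points2_jointly_epi. intros x r.
  set (c := f_equal (fun z => z ⊗ W) (eq_sym (tunitr T (X ⊗ Y)))).
  set (c3 := f_equal (fun z => z ⊗ W) (tunitr T I)).
  set (k := fun hh : hom (((X ⊗ Y) ⊗ Z) ⊗ W) V => hh ∘ ((idm (X ⊗ Y) ⊠ r) ⊠ idm W) ∘ cast c).
  assert (Kk : k h = k h').
  { apply points2_jointly_epi. intros p q.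
    assert (Hs : forall hh, k hh ∘ ((p ⊠ q) ⊠ idm W) =
       hh ∘ (((p ⊠ q) ⊠ r) ⊠ idm W) ∘ cast (f_equal (fun z => z ⊗ W) (eq_sym (tunitr T (I ⊗ I))))).
    { intros hh. unfold k. rewrite <- !comp_assoc. f_equal. apply heq_eq.
      apply (heq_trans _ (((idm (X ⊗ Y) ⊠ r) ⊠ idm W) ∘ (((p ⊠ q) ⊠ idm I) ⊠ idm W))).
      - apply heq_comp. 2: apply heq_refl. apply heq_castl. apply heq_thom. 2: apply heq_refl.
        apply heq_sym, heq_unitr.
      - rewrite <- !thom_comp, !comp_idl, comp_idr. apply heq_sym, heq_castr, heq_refl. }
    rewrite !Hs, Hpqr. reflexivity. }
  assert (Hs : forall hh, hh ∘ ((x ⊠ r) ⊠ idm W) = k hh ∘ (x ⊠ idm W) ∘ cast c3).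
  { intros hh. unfold k. rewrite <- !comp_assoc. f_equal. apply heq_eq.
    apply (heq_trans _ (((idm (X ⊗ Y) ⊠ r) ⊠ idm W) ∘ ((x ⊠ idm I) ⊠ idm W))).
    - rewrite <- !thom_comp, !comp_idl, comp_idr. apply heq_refl.
    - apply heq_comp. 2: apply heq_refl. apply heq_sym. apply heq_castl, heq_castr.
      apply heq_thom. 2: apply heq_refl. apply heq_sym, heq_unitr. }
  rewrite !Hs, Kk. reflexivity.
Qed.

End RegularGenerator.

(** * Orbit maps and the tensor action *)

Section Modules.
Context {A : Cat} (T : SMC A) (Br : Braiding A T) (B : A) (mB : hom (tob T B B) B) (uB : hom (tI T) B).

Local Notation "a ⊗ b" := (tob T a b) (at level 30, right associativity).
Local Notation "f ⊠ g" := (thom T f g) (at level 35).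
Local Notation I := (tI T).
Local Notation RM := (RMod A T B mB uB).
Local Notation ob_ := (rm_ob A T B mB uB).
Local Notation act := (rm_act A T B mB uB).
Local Notation tact := (tensor_action A T B mB uB Br).
Local Notation MC := (ModCat A T B mB uB).
Local Notation mmh := (mm_hom A T B mB uB _ _).

Lemma RMod_eq (X Y : RM) (e : ob_ X = ob_ Y) :
  cast e ∘ act X = act Y ∘ cast (f_equal (fun z => z ⊗ B) e) -> X = Y.
Proof.
  destruct X as [ox ax hx], Y as [oy ay hy]. simpl in *. intros E. destruct e. simpl in E.
  rewrite comp_idl, comp_idr in E. subst. f_equal. apply proof_irrelevance.
Qed.

Lemma modmor_inverse (X Y : RM) (f : hom (ob_ X) (ob_ Y)) (g : hom (ob_ Y) (ob_ X)) :
  g ∘ f = idm _ -> f ∘ g = idm _ -> IsModMor A T B mB uB X Y f -> IsModMor A T B mB uB Y X g.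
Proof.
  unfold IsModMor. intros H1 H2 Hf.
  transitivity (g ∘ act Y ∘ ((f ∘ g) ⊠ idm B)).
  { rewrite H2, thom_id, comp_idr. reflexivity. }
  rewrite thom_compl, comp_assoc, <- (comp_assoc _ _ g), <- Hf, comp_assoc, H1, comp_idl. reflexivity.
Qed.

Definition cast_modmor_inv (X Y : RM) (e : ob_ X = ob_ Y) (Hm : IsModMor A T B mB uB X Y (cast e)) :
    @hom MC Y X :=
  Build_ModMor A T B mB uB Y X (cast (eq_sym e))
    (modmor_inverse X Y (cast e) (cast (eq_sym e)) (cast_inv1 e) (cast_inv2 e) Hm).

Lemma MonStruct_ext (M1 M2 : MonStruct MC) :
  (forall a b, mo M1 a b = mo M2 a b) -> mI M1 = mI M2 ->
  (forall a b c d (f : @hom MC a b) (g : @hom MC c d), heq (mmh (mh M1 f g)) (mmh (mh M2 f g))) ->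
  (forall a b c, heq (mmh (malpha M1 a b c)) (mmh (malpha M2 a b c))) ->
  (forall a, heq (mmh (mlam M1 a)) (mmh (mlam M2 a))) ->
  (forall a, heq (mmh (mrho M1 a)) (mmh (mrho M2 a))) -> M1 = M2.
Proof.
  destruct M1 as [mo1 mh1 mI1 ma1 ml1 mr1 p1 p2 p3 p4 p5 p6 p7 p8 p9 p10],
           M2 as [mo2 mh2 mI2 ma2 ml2 mr2 q1 q2 q3 q4 q5 q6 q7 q8 q9 q10]. simpl.
  intros Hmo HmI Hmh Hma Hml Hmr.
  assert (E1 : mo1 = mo2).
  { apply functional_extensionality; intros a; apply functional_extensionality; intros b; apply Hmo. }
  subst mo2 mI2.
  assert (E2 : mh1 = mh2).
  { repeat (apply functional_extensionality_dep; intro). apply ModMor_eq. apply heq_eq. apply Hmh. }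
  assert (E3 : ma1 = ma2).
  { repeat (apply functional_extensionality_dep; intro). apply ModMor_eq. apply heq_eq. apply Hma. }
  assert (E4 : ml1 = ml2).
  { repeat (apply functional_extensionality_dep; intro). apply ModMor_eq. apply heq_eq. apply Hml. }
  assert (E5 : mr1 = mr2).
  { repeat (apply functional_extensionality_dep; intro). apply ModMor_eq. apply heq_eq. apply Hmr. }
  subst. f_equal; apply proof_irrelevance.
Qed.

Lemma tensor_action_mid_swap (M N : RM) (D : hom B (B ⊗ B)) :
  tact M N D = (act M ⊠ act N) ∘ (mid_swap T Br (ob_ M) (ob_ N) B B ∘ (idm (ob_ M ⊗ ob_ N) ⊠ D)).
Proof. unfold tensor_action, mid_swap. rewrite <- !comp_assoc. reflexivity. Qed.

Lemma tensor_action_nat (M M' N N' : RM) (D : hom B (B ⊗ B))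
    (f : hom (ob_ M) (ob_ M')) (g : hom (ob_ N) (ob_ N')) :
  IsModMor A T B mB uB M M' f -> IsModMor A T B mB uB N N' g ->
  (f ⊠ g) ∘ tact M N D = tact M' N' D ∘ ((f ⊠ g) ⊠ idm B).
Proof.
  unfold IsModMor. intros Hf Hg. rewrite !tensor_action_mid_swap.
  rewrite (comp_assoc _ (act M ⊠ act N)), <- thom_comp, Hf, Hg, thom_comp.
  rewrite <- !comp_assoc. f_equal.
  rewrite (comp_assoc _ (mid_swap T Br _ _ _ _)), mid_swap_nat, <- !comp_assoc. f_equal.
  rewrite <- !thom_comp, thom_id, !comp_idl, !comp_idr. reflexivity.
Qed.

Definition orbit_map (X : RM) (x : hom I (ob_ X)) : hom B (ob_ X) :=
  act X ∘ (x ⊠ idm B) ∘ cast (eq_sym (tunitl T B)).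

Lemma orbit_map_mult (X : RM) (x : hom I (ob_ X)) :
  orbit_map X x ∘ mB = act X ∘ (orbit_map X x ⊠ idm B).
Proof.
  destruct (rm_ax _ _ _ _ _ X) as [HX1 HX2].
  unfold orbit_map. rewrite !thom_compl.
  rewrite !comp_assoc, HX1.
  rewrite <- !comp_assoc. apply heq_eq. apply heq_comp. 2: apply heq_refl.
  apply (heq_trans _ (x ⊠ mB)).
  - apply (heq_trans _ ((x ⊠ idm B) ∘ (idm I ⊠ mB))).
    + apply heq_comp. apply heq_castl. apply heq_sym, heq_unitl. apply heq_refl.
    + rewrite <- thom_comp, comp_idl, comp_idr. apply heq_refl.
  - apply (heq_trans _ ((idm (ob_ X) ⊠ mB) ∘ (x ⊠ (idm B ⊠ idm B)))).
    + rewrite thom_id, <- thom_comp, comp_idl, comp_idr. apply heq_refl.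
    + apply heq_sym. apply heq_comp. 2: apply heq_refl.
      apply heq_castl. eapply heq_comp_idr.
      * eapply heq_trans. apply heq_thom_id. apply heq_cast'. apply heq_refl.
        apply heq_idm. apply tassoc.
      * apply heq_assoc.
Qed.

Lemma orbit_map_unit (X : RM) (x : hom I (ob_ X)) : orbit_map X x ∘ uB = x.
Proof.
  destruct (rm_ax _ _ _ _ _ X) as [HX1 HX2].
  unfold orbit_map. apply heq_eq. rewrite <- !comp_assoc.
  apply (heq_trans _ (act X ∘ ((x ⊠ idm B) ∘ (idm I ⊠ uB)))).
  - apply heq_comp. 2: apply heq_refl. apply heq_comp. 2: apply heq_refl.
    apply heq_castl. apply heq_sym, heq_unitl.
  - rewrite <- thom_comp, comp_idl, comp_idr.
    replace (x ⊠ uB) with ((idm (ob_ X) ⊠ uB) ∘ (x ⊠ idm I)) by (rewrite <- thom_comp, comp_idl, comp_idr; reflexivity).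
    rewrite comp_assoc, HX2.
    apply heq_castl. apply heq_unitr.
Qed.

Lemma tensor_action_points (X Y : RM) (D : hom B (B ⊗ B)) (x : hom I (ob_ X)) (y : hom I (ob_ Y)) :
  heq (tact X Y D ∘ ((x ⊠ y) ⊠ idm B)) ((orbit_map X x ⊠ orbit_map Y y) ∘ D).
Proof.
  rewrite tensor_action_mid_swap. rewrite <- !comp_assoc.
  assert (E1 : (idm (ob_ X ⊗ ob_ Y) ⊠ D) ∘ ((x ⊠ y) ⊠ idm B) = ((x ⊠ y) ⊠ (idm B ⊠ idm B)) ∘ (idm (I ⊗ I) ⊠ D)).
  { rewrite <- !thom_comp, thom_id, !comp_idl, !comp_idr. reflexivity. }
  rewrite E1, (comp_assoc _ _ (mid_swap T Br _ _ _ _)), <- mid_swap_nat.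
  rewrite <- comp_assoc, (comp_assoc _ _ (act X ⊠ act Y)), <- thom_comp.
  unfold orbit_map. rewrite (thom_comp _ T _ _ _ _ _ _ (cast _)), <- comp_assoc.
  apply heq_comp. 2: apply heq_refl.
  eapply heq_trans.
  - eapply heq_comp_idl. apply mid_swap_unit.
    eapply heq_trans. apply heq_thom. apply (heq_idm (tunitl T I)). apply heq_refl. apply heq_unitl.
  - apply heq_sym. eapply heq_comp_idl. apply heq_thom_casts. apply heq_refl.
Qed.

Lemma tensor_action_points' (X Y : RM) (D : hom B (B ⊗ B)) {i j : A} (x : hom i (ob_ X)) (y : hom j (ob_ Y))
  (x' : hom I (ob_ X)) (y' : hom I (ob_ Y)) (g : hom B (ob_ X)) (g' : hom B (ob_ Y)) :
  heq x x' -> heq y y' -> heq (orbit_map X x') g -> heq (orbit_map Y y') g' ->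
  heq (tact X Y D ∘ ((x ⊠ y) ⊠ idm B)) ((g ⊠ g') ∘ D).
Proof.
  intros Hx Hy Hg Hg'.
  apply (heq_trans _ (tact X Y D ∘ ((x' ⊠ y') ⊠ idm B))).
  { apply heq_comp; [apply heq_thom; [apply heq_thom; assumption | apply heq_refl] | apply heq_refl]. }
  eapply heq_trans. apply tensor_action_points.
  apply heq_comp; [apply heq_refl | apply heq_thom; assumption].
Qed.

Hypothesis HB : IsAlgebra A T B mB uB.

Definition reg_mod : RM :=
  Build_RMod A T B mB uB B mB (conj (proj1 HB) (proj2 (proj2 HB))).

Lemma orbit_map_modmor (X : RM) (x : hom I (ob_ X)) : IsModMor A T B mB uB reg_mod X (orbit_map X x).
Proof. unfold IsModMor. simpl. apply orbit_map_mult. Qed.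

Lemma tensor_action_nat_reg_mod (M N : RM) (D : hom B (B ⊗ B)) (f : hom B (ob_ M)) (g : hom B (ob_ N)) :
  IsModMor A T B mB uB reg_mod M f -> IsModMor A T B mB uB reg_mod N g ->
  (f ⊠ g) ∘ tact reg_mod reg_mod D = tact M N D ∘ ((f ⊠ g) ⊠ idm B).
Proof. apply tensor_action_nat. Qed.

Lemma orbit_map_reg_mod_unit : orbit_map reg_mod uB = idm B.
Proof.
  unfold orbit_map. simpl. rewrite (proj1 (proj2 HB)). apply cast_inv2.
Qed.

Lemma orbit_map_reg_mod_unit_heq : heq (orbit_map reg_mod uB) (idm B).
Proof. rewrite orbit_map_reg_mod_unit. apply heq_refl. Qed.

Lemma comul_recover (D : hom B (B ⊗ B)) :
  heq (tact reg_mod reg_mod D ∘ ((uB ⊠ uB) ⊠ idm B)) D.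
Proof.
  eapply heq_trans. apply tensor_action_points. rewrite orbit_map_reg_mod_unit, thom_id, comp_idl. apply heq_refl.
Qed.

Lemma compat_mid_swap (D : hom B (B ⊗ B)) :
  D ∘ mB = (mB ⊠ mB) ∘ cast (eq_sym (e4 A T B B B B)) ∘ ((idm B ⊠ br Br B B) ⊠ idm B)
             ∘ cast (e4 A T B B B B) ∘ (D ⊠ D) ->
  D ∘ mB = (mB ⊠ mB) ∘ (mid_swap T Br B B B B ∘ (D ⊠ D)).
Proof. intros H. rewrite H. unfold mid_swap. rewrite <- !comp_assoc. reflexivity. Qed.

Hypothesis HI : RegularGenerator I.
Hypothesis Hr : forall X : A,
  PreservesColimits (fun a : A => a ⊗ X) (fun a b (f : hom a b) => f ⊠ idm X).

(** * From bialgebras to monoidal structures *)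

Section TensorAction.
Variable D : hom B (B ⊗ B).

Lemma tensor_action_assoc (M N : RM) :
  D ∘ mB = (mB ⊠ mB) ∘ (mid_swap T Br B B B B ∘ (D ⊠ D)) ->
  tact M N D ∘ (tact M N D ⊠ idm B)
  = tact M N D ∘ (idm (ob_ M ⊗ ob_ N) ⊠ mB) ∘ cast (tassoc T (ob_ M ⊗ ob_ N) B B).
Proof.
  intros Hcomp.
  set (P := ob_ M ⊗ ob_ N). set (τ := tact M N D).
  apply (cast_cancel_r _ _ (eq_sym (tassoc T P B B))).
  apply (points2_jointly_epi T HI Hr (ob_ M) (ob_ N) (B ⊗ B)). intros p q.
  apply heq_eq.
  apply (heq_trans _ ((orbit_map M p ⊠ orbit_map N q) ∘ (D ∘ mB))).
  - rewrite <- !comp_assoc.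
    assert (Hs : heq ((p ⊠ q) ⊠ idm (B ⊗ B)) (((p ⊠ q) ⊠ idm B) ⊠ idm B)).
    { rewrite <- thom_id. apply heq_sym, heq_assoc. }
    rewrite (heq_slide' Hs).
    rewrite (comp_assoc _ _ (tact M N D ⊠ idm B)), <- thom_comp, comp_idl.
    rewrite comp_assoc. apply heq_castr.
    apply (heq_trans _ (τ ∘ (((orbit_map M p ⊠ orbit_map N q) ∘ D) ⊠ idm B))).
    { apply heq_comp. 2: apply heq_refl. apply heq_thom. 2: apply heq_refl. apply tensor_action_points. }
    rewrite thom_compl, comp_assoc. unfold τ.
    rewrite <- (tensor_action_nat_reg_mod M N D _ _ (orbit_map_modmor M p) (orbit_map_modmor N q)).
    rewrite <- comp_assoc. apply heq_comp. 2: apply heq_refl.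
    rewrite tensor_action_mid_swap, Hcomp, <- !comp_assoc, <- thom_comp, comp_idl, comp_idr. apply heq_refl.
  - apply heq_sym. rewrite <- !comp_assoc, cast_compK, cast_idm, comp_idl.
    replace ((idm P ⊠ mB) ∘ ((p ⊠ q) ⊠ idm (B ⊗ B))) with (((p ⊠ q) ⊠ idm B) ∘ (idm (I ⊗ I) ⊠ mB))
      by (rewrite <- !thom_comp, !comp_idl, !comp_idr; reflexivity).
    rewrite comp_assoc, (comp_assoc _ _ (orbit_map M p ⊠ orbit_map N q)).
    apply heq_comp.
    + eapply heq_trans. apply heq_thom. apply (heq_idm (tunitl T I)). apply heq_refl. apply heq_unitl.
    + apply tensor_action_points.
Qed.

Lemma tensor_action_unit (M N : RM) :
  D ∘ uB = (uB ⊠ uB) ∘ cast (eq_sym (tunitl T I)) ->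
  tact M N D ∘ (idm (ob_ M ⊗ ob_ N) ⊠ uB) = cast (tunitr T (ob_ M ⊗ ob_ N)).
Proof.
  intros Hdu.
  apply (points2_jointly_epi T HI Hr (ob_ M) (ob_ N) I). intros p q.
  apply heq_eq.
  apply (heq_trans _ (p ⊠ q)).
  - rewrite <- comp_assoc. replace ((idm (ob_ M ⊗ ob_ N) ⊠ uB) ∘ ((p ⊠ q) ⊠ idm I)) with (((p ⊠ q) ⊠ idm B) ∘ (idm (I ⊗ I) ⊠ uB))
      by (rewrite <- !thom_comp, !comp_idl, !comp_idr; reflexivity).
    rewrite comp_assoc.
    apply (heq_trans _ ((orbit_map M p ⊠ orbit_map N q) ∘ D ∘ uB)).
    + apply heq_comp.
      * eapply heq_trans. apply heq_thom. apply (heq_idm (tunitl T I)). apply heq_refl. apply heq_unitl.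
      * apply tensor_action_points.
    + rewrite <- comp_assoc, Hdu, comp_assoc, <- thom_comp, !orbit_map_unit. apply heq_castr. apply heq_refl.
  - apply heq_sym. apply heq_castl. apply heq_unitr.
Qed.

End TensorAction.

Lemma counit_action_ax (eps : hom B I) :
  eps ∘ uB = idm I -> eps ∘ mB = cast (tunitl T I) ∘ (eps ⊠ eps) ->
  IsRightModule A T B mB uB I (eps ∘ cast (tunitl T B)).
Proof.
  intros Heu Hem. split.
  - apply heq_eq. apply (heq_trans _ (eps ⊠ eps)).
    + apply (heq_trans _ ((eps ∘ cast (tunitl T B)) ∘ (eps ⊠ idm B))).
      * apply heq_comp. 2: apply heq_refl. apply heq_thom. 2: apply heq_refl. apply heq_castr. apply heq_refl.
      * replace (eps ⊠ eps) with ((idm I ⊠ eps) ∘ (eps ⊠ idm B)) by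
          (rewrite <- thom_comp, comp_idl, comp_idr; reflexivity).
        apply heq_comp. apply heq_refl. apply heq_castr. apply heq_sym, heq_unitl.
    + rewrite <- !comp_assoc, (comp_assoc _ (cast (tunitl T B))), <- (thom_unitl _ T).
      rewrite <- comp_assoc, (comp_assoc _ _ (idm I ⊠ eps)), <- thom_comp, comp_idl, Hem.
      apply heq_sym, heq_castl, heq_castr. eapply heq_trans. apply heq_unitl. apply heq_castl, heq_refl.
  - rewrite <- comp_assoc, (thom_unitl _ T), comp_assoc, Heu, comp_idl. apply cast_proof_irr.
Qed.

Section FromBialgebra.
Variables (D : hom B (B ⊗ B)) (eps : hom B I).
Hypothesis H : IsBialgebra A T B mB uB Br D eps.

Definition mod_tensor (M N : RM) : RM.
Proof.
  refine (Build_RMod A T B mB uB (ob_ M ⊗ ob_ N) (tact M N D) _).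
  destruct H as (_ & _ & _ & Hmult & _ & Hunit & _).
  exact (conj (tensor_action_assoc D M N (compat_mid_swap D Hmult)) (tensor_action_unit D M N Hunit)).
Defined.

Definition mod_unit : RM.
Proof.
  refine (Build_RMod A T B mB uB I (eps ∘ cast (tunitl T B)) _).
  destruct H as (_ & _ & _ & _ & Heu & _ & Hem).
  exact (counit_action_ax eps Heu Hem).
Defined.

Lemma orbit_map_tensor (M N : RM) (m : hom I (ob_ M)) (n : hom I (ob_ N)) :
  heq (orbit_map (mod_tensor M N) ((m ⊠ n) ∘ cast (eq_sym (tunitl T I))))
      ((orbit_map M m ⊠ orbit_map N n) ∘ D).
Proof.
  unfold orbit_map at 1. change (rm_act A T B mB uB (mod_tensor M N)) with (tact M N D).
  apply heq_castr. eapply heq_trans. 2: apply tensor_action_points.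
  apply heq_comp. 2: apply heq_refl. apply heq_thom. 2: apply heq_refl. apply heq_castr, heq_refl.
Qed.

Lemma orbit_map_mod_unit : heq (orbit_map mod_unit (idm I)) eps.
Proof.
  unfold orbit_map. change (rm_act A T B mB uB mod_unit) with (eps ∘ cast (tunitl T B)).
  rewrite thom_id, comp_idr. apply heq_castr, heq_castr, heq_refl.
Qed.

Lemma assoc_modmor (M N P : RM) :
  IsModMor A T B mB uB (mod_tensor (mod_tensor M N) P) (mod_tensor M (mod_tensor N P))
    (cast (tassoc T (ob_ M) (ob_ N) (ob_ P))).
Proof.
  destruct H as (Hcoass & _).
  unfold IsModMor. change (rm_act A T B mB uB (mod_tensor (mod_tensor M N) P)) with (tact (mod_tensor M N) P D).
  change (rm_act A T B mB uB (mod_tensor M (mod_tensor N P))) with (tact M (mod_tensor N P) D).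
  apply (points3_jointly_epi T HI Hr). intros m n r. apply heq_eq.
  apply (heq_trans _ ((orbit_map M m ⊠ (orbit_map N n ⊠ orbit_map P r)) ∘ ((idm B ⊠ D) ∘ D))).
  - rewrite <- comp_assoc. apply heq_castl.
    eapply heq_trans.
    apply (tensor_action_points' (mod_tensor M N) P D (m ⊠ n) r ((m ⊠ n) ∘ cast (eq_sym (tunitl T I))) r
             ((orbit_map M m ⊠ orbit_map N n) ∘ D) (orbit_map P r)).
    apply heq_sym, heq_castr, heq_refl. apply heq_refl. apply orbit_map_tensor. apply heq_refl.
    apply (heq_trans _ (((orbit_map M m ⊠ orbit_map N n) ⊠ orbit_map P r) ∘ ((D ⊠ idm B) ∘ D))).
    { rewrite comp_assoc. apply heq_comp. apply heq_refl. apply eq_heq. rewrite <- thom_comp, comp_idr. reflexivity. }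
    rewrite Hcoass, <- !comp_assoc, (comp_assoc _ (cast _)).
    apply heq_comp. apply heq_refl. apply heq_castr, heq_assoc.
  - apply heq_sym. rewrite <- comp_assoc, <- thom_comp, comp_idl.
    apply (heq_trans _ (tact M (mod_tensor N P) D ∘ ((m ⊠ (n ⊠ r)) ⊠ idm B))).
    { apply heq_comp. 2: apply heq_refl. apply heq_thom. 2: apply heq_refl. apply heq_castl, heq_assoc. }
    eapply heq_trans.
    apply (tensor_action_points' M (mod_tensor N P) D m (n ⊠ r) m ((n ⊠ r) ∘ cast (eq_sym (tunitl T I)))
             (orbit_map M m) ((orbit_map N n ⊠ orbit_map P r) ∘ D)).
    apply heq_refl. apply heq_castr', heq_refl. apply heq_refl. apply orbit_map_tensor.
    rewrite comp_assoc. apply heq_comp. apply heq_refl. apply eq_heq. rewrite <- thom_comp, comp_idr. reflexivity.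
Qed.

Lemma lunit_modmor (M : RM) :
  IsModMor A T B mB uB (mod_tensor mod_unit M) M (cast (tunitl T (ob_ M))).
Proof.
  destruct H as (_ & Hcl & _).
  unfold IsModMor. change (rm_act A T B mB uB (mod_tensor mod_unit M)) with (tact mod_unit M D).
  apply (points_jointly_epi_cast T HI Hr (ob_ M) B _ _ (f_equal (fun z => z ⊗ B) (eq_sym (tunitl T (ob_ M)))) ).
  intros m. apply heq_eq. rewrite <- !comp_assoc.
  apply (heq_trans _ (orbit_map M m)).
  - apply heq_castl.
    apply (heq_trans _ (tact mod_unit M D ∘ ((idm I ⊠ m) ⊠ idm B))).
    { apply heq_comp. 2: apply heq_refl. apply heq_castl. apply heq_thom. 2: apply heq_refl. apply heq_sym, heq_unitl. }
    eapply heq_trans. apply (tensor_action_points' mod_unit M D (idm I) m (idm I) m eps (orbit_map M m)).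
    apply heq_refl. apply heq_refl. apply orbit_map_mod_unit. apply heq_refl.
    apply (heq_trans _ ((idm I ⊠ orbit_map M m) ∘ ((eps ⊠ idm B) ∘ D))).
    { rewrite comp_assoc. apply heq_comp. apply heq_refl. apply eq_heq.
      rewrite <- thom_comp, comp_idl, comp_idr. reflexivity. }
    rewrite Hcl. apply heq_castr, heq_unitl.
  - apply heq_sym. apply (heq_trans _ (act M ∘ (m ⊠ idm B))).
    + apply heq_comp. 2: apply heq_refl.
      eapply heq_comp_idl. apply heq_thom_id. apply heq_cast'. apply heq_refl. apply heq_castl, heq_refl.
    + unfold orbit_map. apply heq_castr', heq_refl.
Qed.

Lemma runit_modmor (M : RM) :
  IsModMor A T B mB uB (mod_tensor M mod_unit) M (cast (tunitr T (ob_ M))).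
Proof.
  destruct H as (_ & _ & Hcr & _).
  unfold IsModMor. change (rm_act A T B mB uB (mod_tensor M mod_unit)) with (tact M mod_unit D).
  apply (points_jointly_epi_cast T HI Hr (ob_ M) B _ _ (f_equal (fun z => z ⊗ B) (eq_sym (tunitr T (ob_ M)))) ).
  intros m. apply heq_eq. rewrite <- !comp_assoc.
  apply (heq_trans _ (orbit_map M m)).
  - apply heq_castl.
    apply (heq_trans _ (tact M mod_unit D ∘ ((m ⊠ idm I) ⊠ idm B))).
    { apply heq_comp. 2: apply heq_refl. apply heq_castl. apply heq_thom. 2: apply heq_refl. apply heq_sym, heq_unitr. }
    eapply heq_trans. apply (tensor_action_points' M mod_unit D m (idm I) m (idm I) (orbit_map M m) eps).
    apply heq_refl. apply heq_refl. apply heq_refl. apply orbit_map_mod_unit.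
    apply (heq_trans _ ((orbit_map M m ⊠ idm I) ∘ ((idm B ⊠ eps) ∘ D))).
    { rewrite comp_assoc. apply heq_comp. apply heq_refl. apply eq_heq.
      rewrite <- thom_comp, comp_idl, comp_idr. reflexivity. }
    rewrite Hcr. apply heq_castr, heq_unitr.
  - apply heq_sym. apply (heq_trans _ (act M ∘ (m ⊠ idm B))).
    + apply heq_comp. 2: apply heq_refl.
      eapply heq_comp_idl. apply heq_thom_id. apply heq_cast'. apply heq_refl. apply heq_castl, heq_refl.
    + unfold orbit_map. apply heq_castr', heq_refl.
Qed.

Definition mod_thom (a b c d : MC) (f : hom a b) (g : hom c d) : @hom MC (mod_tensor a c) (mod_tensor b d).
Proof.
  refine (Build_ModMor A T B mB uB (mod_tensor a c) (mod_tensor b d) (mmh f ⊠ mmh g) _).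
  unfold IsModMor. apply tensor_action_nat. apply (mm_ax _ _ _ _ _ _ _ f). apply (mm_ax _ _ _ _ _ _ _ g).
Defined.

Definition mod_assoc (a b c : MC) : @hom MC (mod_tensor (mod_tensor a b) c) (mod_tensor a (mod_tensor b c)) :=
  Build_ModMor A T B mB uB (mod_tensor (mod_tensor a b) c) (mod_tensor a (mod_tensor b c))
    (cast (tassoc T (ob_ a) (ob_ b) (ob_ c))) (assoc_modmor a b c).

Definition mod_lunit (a : MC) : @hom MC (mod_tensor mod_unit a) a :=
  Build_ModMor A T B mB uB (mod_tensor mod_unit a) a (cast (tunitl T (ob_ a))) (lunit_modmor a).

Definition mod_runit (a : MC) : @hom MC (mod_tensor a mod_unit) a :=
  Build_ModMor A T B mB uB (mod_tensor a mod_unit) a (cast (tunitr T (ob_ a))) (runit_modmor a).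

Definition mon_of_bialg : MonStruct MC.
Proof.
  refine (Build_MonStruct MC mod_tensor mod_thom mod_unit mod_assoc mod_lunit mod_runit _ _ _ _ _ _ _ _ _ _).
  - intros a c. apply ModMor_eq. simpl. apply thom_id.
  - intros. apply ModMor_eq. simpl. apply thom_comp.
  - intros. apply ModMor_eq. simpl. apply thom_assoc.
  - intros. apply ModMor_eq. simpl. apply (thom_unitl _ T).
  - intros. apply ModMor_eq. simpl. apply (thom_unitr _ T).
  - intros a b c. exists (cast_modmor_inv (mod_tensor (mod_tensor a b) c) (mod_tensor a (mod_tensor b c)) (tassoc T (ob_ a) (ob_ b) (ob_ c)) (assoc_modmor a b c)).
    split; apply ModMor_eq; simpl. apply cast_inv1. apply cast_inv2.
  - intros a. exists (cast_modmor_inv (mod_tensor mod_unit a) a (tunitl T (ob_ a)) (lunit_modmor a)).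
    split; apply ModMor_eq; simpl. apply cast_inv1. apply cast_inv2.
  - intros a. exists (cast_modmor_inv (mod_tensor a mod_unit) a (tunitr T (ob_ a)) (runit_modmor a)).
    split; apply ModMor_eq; simpl. apply cast_inv1. apply cast_inv2.
  - intros a b c d. apply ModMor_eq. simpl.
    rewrite thom_idcast, thom_castid, !cast_comp. apply cast_proof_irr.
  - intros a b. apply ModMor_eq. simpl.
    rewrite thom_idcast, thom_castid, !cast_comp. apply cast_proof_irr.
Defined.

Lemma mon_of_bialg_strict : IsStrictMonoidalFunctor mon_of_bialg T (Forget A T B mB uB).
Proof.
  exists (fun a b => eq_refl), eq_refl. split; [|split; [|split]].
  - intros. simpl. rewrite comp_idl, comp_idr. reflexivity.
  - intros. simpl. rewrite ?comp_idl, ?comp_idr; try reflexivity; rewrite ?cast_comp; apply cast_proof_irr.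
  - intros. simpl. rewrite ?comp_idl, ?comp_idr; try reflexivity; rewrite ?cast_comp; apply cast_proof_irr.
  - intros. simpl. rewrite ?comp_idl, ?comp_idr; try reflexivity; rewrite ?cast_comp; apply cast_proof_irr.
Qed.

End FromBialgebra.

Definition mon_struct_of (x : BialgStr A T B mB uB Br) : ModMonStr A T B mB uB :=
  exist _ (mon_of_bialg (fst (proj1_sig x)) (snd (proj1_sig x)) (proj2_sig x))
          (mon_of_bialg_strict (fst (proj1_sig x)) (snd (proj1_sig x)) (proj2_sig x)).

Lemma mon_struct_of_corresponds (x : BialgStr A T B mB uB Br) :
  Corresponds A T B mB uB Br (mon_struct_of x) x.
Proof.
  destruct x as [[D eps] H]. split.
  - intros M N e. simpl in *. rewrite !cast_idm, comp_idl, comp_idr. reflexivity.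
  - intros e. simpl in *. rewrite !cast_idm, comp_idl, comp_idr. reflexivity.
Qed.

Lemma mon_struct_of_inj (x y : BialgStr A T B mB uB Br) : mon_struct_of x = mon_struct_of y -> x = y.
Proof.
  intros E.
  pose proof (mon_struct_of_corresponds x) as [Cx1 Cx2]. pose proof (mon_struct_of_corresponds y) as [Cy1 Cy2].
  rewrite E in Cx1, Cx2.
  destruct x as [[Dx ex] Hx], y as [[Dy ey] Hy]. simpl in *.
  assert (ED : Dx = Dy).
  { specialize (Cx1 reg_mod reg_mod eq_refl). specialize (Cy1 reg_mod reg_mod eq_refl).
    simpl in Cx1, Cy1. rewrite comp_idl, comp_idr in Cx1, Cy1.
    assert (Et : tact reg_mod reg_mod Dx = tact reg_mod reg_mod Dy) by (symmetry; exact Cx1).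
    apply heq_eq. eapply heq_trans. apply heq_sym, comul_recover. rewrite Et. apply comul_recover. }
  assert (Ee : ex = ey).
  { specialize (Cx2 eq_refl). specialize (Cy2 eq_refl). simpl in Cx2, Cy2.
    rewrite comp_idl, comp_idr in Cx2.
    symmetry. exact (cast_cancel_r _ _ _ Cx2). }
  subst. f_equal. apply proof_irrelevance.
Qed.

(** * From monoidal structures to bialgebras *)

Section FromMonoidal.
Variable M : MonStruct MC.
Variable eo : forall a b : MC, ob_ (mo M a b) = ob_ a ⊗ ob_ b.
Variable eI : ob_ (mI M) = I.
Hypothesis strict_thom : forall (a b c d : MC) (f : @hom MC a b) (g : @hom MC c d),
  heq (mmh (mh M f g)) (mmh f ⊠ mmh g).
Hypothesis strict_assoc : forall a b c : MC,
  heq (mmh (malpha M a b c)) (cast (tassoc T (ob_ a) (ob_ b) (ob_ c))).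
Hypothesis strict_lunit : forall a : MC, heq (mmh (mlam M a)) (cast (tunitl T (ob_ a))).
Hypothesis strict_runit : forall a : MC, heq (mmh (mrho M a)) (cast (tunitr T (ob_ a))).

Definition act_tensor (P Q : MC) : hom ((ob_ P ⊗ ob_ Q) ⊗ B) (ob_ P ⊗ ob_ Q) :=
  cast (eo P Q) ∘ act (mo M P Q) ∘ cast (eq_sym (f_equal (fun z => z ⊗ B) (eo P Q))).

Lemma act_tensor_heq (P Q : MC) : heq (act_tensor P Q) (act (mo M P Q)).
Proof. unfold act_tensor. apply heq_castr, heq_castl, heq_refl. Qed.

Lemma act_tensor_nat (P P' Q Q' : MC) (f : @hom MC P P') (g : @hom MC Q Q') :
  (mmh f ⊠ mmh g) ∘ act_tensor P Q = act_tensor P' Q' ∘ ((mmh f ⊠ mmh g) ⊠ idm B).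
Proof.
  apply heq_eq.
  apply (heq_trans _ (mmh (mh M f g) ∘ act (mo M P Q))).
  - apply heq_comp. apply act_tensor_heq. apply heq_sym, strict_thom.
  - rewrite (mm_ax _ _ _ _ _ _ _ (mh M f g)). apply heq_comp.
    + apply heq_thom. apply strict_thom. apply heq_refl.
    + apply heq_sym, act_tensor_heq.
Qed.

Definition orbit_modmor (P : MC) (p : hom I (ob_ P)) : @hom MC reg_mod P :=
  Build_ModMor A T B mB uB reg_mod P (orbit_map P p) (orbit_map_modmor P p).

Definition comul_of : hom B (B ⊗ B) :=
  act_tensor reg_mod reg_mod ∘ ((uB ⊠ uB) ⊠ idm B)
    ∘ cast (eq_trans (eq_sym (tunitl T B)) (f_equal (fun z => z ⊗ B) (eq_sym (tunitl T I)))).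

(* Both actions are natural in the module maps [orbit_map P p : B -> P]; composed
   with [u ⊗ u] these reduce everything to [P = Q = B], where the two sides agree by
   the definition of [comul_of]. *)
Lemma act_tensor_eq (P Q : MC) : act_tensor P Q = tact P Q comul_of.
Proof.
  apply (points2_jointly_epi T HI Hr (ob_ P) (ob_ Q) B). intros p q.
  rewrite <- (orbit_map_unit P p), <- (orbit_map_unit Q q).
  rewrite thom_comp, thom_compl, !comp_assoc.
  change (orbit_map P p) with (mmh (orbit_modmor P p)). change (orbit_map Q q) with (mmh (orbit_modmor Q q)).
  pose proof (act_tensor_nat reg_mod P reg_mod Q (orbit_modmor P p) (orbit_modmor Q q)) as E1.
  pose proof (tensor_action_nat_reg_mod P Q comul_of _ _ (mm_ax _ _ _ _ _ _ _ (orbit_modmor P p)) (mm_ax _ _ _ _ _ _ _ (orbit_modmor Q q))) as E2.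
  simpl in E1, E2. simpl. rewrite <- E1, <- E2.
  rewrite <- !comp_assoc. f_equal.
  apply heq_eq. eapply heq_trans. 2: apply heq_sym, comul_recover.
  unfold comul_of. apply heq_castr'. apply heq_refl.
Qed.

Lemma act_heq_tensor_action (P Q : MC) : heq (act (mo M P Q)) (tact P Q comul_of).
Proof. eapply heq_trans. apply heq_sym, act_tensor_heq. rewrite act_tensor_eq. apply heq_refl. Qed.

Lemma act_tensor_points (X Y : MC) {k i j G1 G2 : A} (z : hom k (ob_ (mo M X Y)))
  (x : hom i (ob_ X)) (y : hom j (ob_ Y))
  (x' : hom I (ob_ X)) (y' : hom I (ob_ Y)) (g : hom B G1) (g' : hom B G2) :
  heq z (x ⊠ y) -> heq x x' -> heq y y' -> heq (orbit_map X x') g -> heq (orbit_map Y y') g' ->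
  heq (act (mo M X Y) ∘ (z ⊠ idm B)) ((g ⊠ g') ∘ comul_of).
Proof.
  intros Hz Hx Hy Hg Hg'.
  eapply heq_trans. apply (heq_comp _ _ ((x ⊠ y) ⊠ idm B) (tact X Y comul_of)).
  apply heq_thom. exact Hz. apply heq_refl. apply act_heq_tensor_action.
  eapply heq_trans. apply (tensor_action_points' X Y comul_of x y x' y' (orbit_map X x') (orbit_map Y y')); auto using heq_refl.
  apply heq_comp. apply heq_refl. apply heq_thom; assumption.
Qed.

Lemma orbit_map_unit_tensor (x : hom I (ob_ (mo M reg_mod reg_mod))) :
  heq x (uB ⊠ uB) -> heq (orbit_map (mo M reg_mod reg_mod) x) comul_of.
Proof.
  intros Hx. unfold orbit_map at 1. apply heq_castr.
  eapply heq_trans. apply (act_tensor_points reg_mod reg_mod x uB uB uB uB (idm B) (idm B));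
      auto using heq_refl, orbit_map_reg_mod_unit_heq.
  rewrite thom_id, comp_idl. apply heq_refl.
Qed.

Definition unit_tensor_point : hom I (ob_ (mo M reg_mod reg_mod)) :=
  cast (eq_sym (eo reg_mod reg_mod)) ∘ (uB ⊠ uB) ∘ cast (eq_sym (tunitl T I)).

Lemma unit_tensor_point_heq : heq unit_tensor_point (uB ⊠ uB).
Proof. unfold unit_tensor_point. apply heq_castr, heq_castl, heq_refl. Qed.

Lemma act_unit_tensor_point : heq (act (mo M reg_mod reg_mod) ∘ (unit_tensor_point ⊠ idm B)) comul_of.
Proof.
  eapply heq_trans. apply (act_tensor_points reg_mod reg_mod unit_tensor_point uB uB uB uB (idm B) (idm B));
      auto using heq_refl, orbit_map_reg_mod_unit_heq, unit_tensor_point_heq.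
  rewrite thom_id, comp_idl. apply heq_refl.
Qed.

(* B-linearity of the associator at [(B, B, B)], evaluated at [u ⊗ u ⊗ u]; similarly
   the counit laws come from the unitors and the multiplicativity of Δ and ε from
   the module axioms of [B ⊗ B] and I. *)
Lemma comul_of_coassoc :
  (comul_of ⊠ idm B) ∘ comul_of = cast (eq_sym (tassoc T B B B)) ∘ (idm B ⊠ comul_of) ∘ comul_of.
Proof.
  set (z1 := cast (eq_sym (eo (mo M reg_mod reg_mod) reg_mod)) ∘ (unit_tensor_point ⊠ uB) ∘ cast (eq_sym (tunitl T I))).
  assert (Hz1 : heq z1 (unit_tensor_point ⊠ uB)) by (unfold z1; apply heq_castr, heq_castl, heq_refl).
  pose proof (mm_ax _ _ _ _ _ _ _ (malpha M reg_mod reg_mod reg_mod)) as E. unfold IsModMor in E.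
  assert (Hα : heq (mmh (malpha M reg_mod reg_mod reg_mod)) (idm ((B ⊗ B) ⊗ B))).
  { eapply heq_trans. apply strict_assoc. apply heq_cast. }
  apply heq_eq. rewrite <- comp_assoc. apply heq_castl'.
  apply (heq_trans _ (mmh (malpha M reg_mod reg_mod reg_mod) ∘ act (mo M (mo M reg_mod reg_mod) reg_mod) ∘ (z1 ⊠ idm B))).
  - apply heq_sym. rewrite <- comp_assoc. apply (heq_comp_idl _ _ _ Hα).
    apply (act_tensor_points (mo M reg_mod reg_mod) reg_mod z1 unit_tensor_point uB unit_tensor_point uB comul_of (idm B));
      auto using heq_refl, orbit_map_reg_mod_unit_heq.
    apply orbit_map_unit_tensor, unit_tensor_point_heq.
  - rewrite E, <- comp_assoc, <- thom_comp, comp_idl.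
    apply (act_tensor_points reg_mod (mo M reg_mod reg_mod) _ uB unit_tensor_point uB unit_tensor_point (idm B) comul_of);
      auto using heq_refl, orbit_map_reg_mod_unit_heq.
    + apply (heq_comp_idl _ _ _ Hα). eapply heq_trans. exact Hz1.
      eapply heq_trans. apply heq_thom. exact unit_tensor_point_heq. apply heq_refl.
      eapply heq_trans. apply heq_assoc. apply heq_thom. apply heq_refl. apply heq_sym, unit_tensor_point_heq.
    + apply orbit_map_unit_tensor, unit_tensor_point_heq.
Qed.

Definition counit_act : hom (I ⊗ B) I :=
  cast eI ∘ act (mI M) ∘ cast (eq_sym (f_equal (fun z => z ⊗ B) eI)).

Definition counit_of : hom B I :=
  cast eI ∘ act (mI M) ∘ cast (eq_sym (f_equal (fun z => z ⊗ B) eI)) ∘ cast (eq_sym (tunitl T B)).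

Lemma counit_act_of : counit_act = counit_of ∘ cast (tunitl T B).
Proof. unfold counit_of, counit_act. rewrite <- !comp_assoc, cast_comp, cast_idm, comp_idr. reflexivity. Qed.

Lemma counit_act_heq : heq (act (mI M)) counit_act.
Proof. unfold counit_act. apply heq_castr', heq_castl', heq_refl. Qed.

Lemma counit_of_heq : heq (act (mI M)) counit_of.
Proof. unfold counit_of. apply heq_castr', heq_castr', heq_castl', heq_refl. Qed.

Definition unit_point : hom I (ob_ (mI M)) := cast (eq_sym eI).

Lemma unit_point_heq : heq unit_point (idm I).
Proof. apply heq_cast. Qed.

Lemma orbit_map_unit_point : heq (orbit_map (mI M) unit_point) counit_of.
Proof.
  unfold orbit_map at 1. apply heq_castr. eapply heq_comp_idr.
  apply heq_thom_id. apply heq_cast'. apply heq_refl. apply counit_of_heq.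
Qed.

Lemma comul_of_counitl : (counit_of ⊠ idm B) ∘ comul_of = cast (eq_sym (tunitl T B)).
Proof.
  set (z := cast (eq_sym (eo (mI M) reg_mod)) ∘ (unit_point ⊠ uB) ∘ cast (eq_sym (tunitl T I))).
  assert (Hz : heq z (unit_point ⊠ uB)) by (unfold z; apply heq_castr, heq_castl, heq_refl).
  pose proof (mm_ax _ _ _ _ _ _ _ (mlam M reg_mod)) as E. unfold IsModMor in E.
  assert (Hl : heq (mmh (mlam M reg_mod)) (idm B)).
  { eapply heq_trans. apply strict_lunit. apply heq_cast'. }
  apply heq_eq.
  apply (heq_trans _ (mmh (mlam M reg_mod) ∘ act (mo M (mI M) reg_mod) ∘ (z ⊠ idm B))).
  - apply heq_sym. rewrite <- comp_assoc. apply (heq_comp_idl _ _ _ Hl).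
    apply (act_tensor_points (mI M) reg_mod z unit_point uB unit_point uB counit_of (idm B));
      auto using heq_refl, orbit_map_reg_mod_unit_heq, orbit_map_unit_point.
  - rewrite E, <- comp_assoc, <- thom_comp, comp_idl.
    change (act reg_mod) with mB.
    apply (heq_trans _ (mB ∘ (uB ⊠ idm B))).
    + apply heq_comp. 2: apply heq_refl. apply heq_thom. 2: apply heq_refl.
      apply (heq_comp_idl _ _ _ Hl). eapply heq_trans. exact Hz.
      eapply heq_trans. apply heq_thom. apply unit_point_heq. apply heq_refl. apply heq_unitl.
    + rewrite (proj1 (proj2 HB)). apply heq_casts. exact (tunitl T B).
Qed.

Lemma comul_of_counitr : (idm B ⊠ counit_of) ∘ comul_of = cast (eq_sym (tunitr T B)).
Proof.
  set (z := cast (eq_sym (eo reg_mod (mI M))) ∘ (uB ⊠ unit_point) ∘ cast (eq_sym (tunitl T I))).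
  assert (Hz : heq z (uB ⊠ unit_point)) by (unfold z; apply heq_castr, heq_castl, heq_refl).
  pose proof (mm_ax _ _ _ _ _ _ _ (mrho M reg_mod)) as E. unfold IsModMor in E.
  assert (Hl : heq (mmh (mrho M reg_mod)) (idm B)).
  { eapply heq_trans. apply strict_runit. apply heq_cast'. }
  apply heq_eq.
  apply (heq_trans _ (mmh (mrho M reg_mod) ∘ act (mo M reg_mod (mI M)) ∘ (z ⊠ idm B))).
  - apply heq_sym. rewrite <- comp_assoc. apply (heq_comp_idl _ _ _ Hl).
    apply (act_tensor_points reg_mod (mI M) z uB unit_point uB unit_point (idm B) counit_of);
      auto using heq_refl, orbit_map_reg_mod_unit_heq, orbit_map_unit_point.
  - rewrite E, <- comp_assoc, <- thom_comp, comp_idl.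
    change (act reg_mod) with mB.
    apply (heq_trans _ (mB ∘ (uB ⊠ idm B))).
    + apply heq_comp. 2: apply heq_refl. apply heq_thom. 2: apply heq_refl.
      apply (heq_comp_idl _ _ _ Hl). eapply heq_trans. exact Hz.
      eapply heq_trans. apply heq_thom. apply heq_refl. apply unit_point_heq. apply heq_unitr.
    + rewrite (proj1 (proj2 HB)). apply heq_casts. exact (tunitl T B).
Qed.

Lemma tensor_action_comul_of : tact reg_mod reg_mod comul_of ∘ (comul_of ⊠ idm B) =
  (mB ⊠ mB) ∘ cast (eq_sym (e4 A T B B B B)) ∘ ((idm B ⊠ br Br B B) ⊠ idm B)
    ∘ cast (e4 A T B B B B) ∘ (comul_of ⊠ comul_of).
Proof.
  rewrite tensor_action_mid_swap, <- !comp_assoc, <- thom_comp, comp_idl, comp_idr.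
  unfold mid_swap. rewrite <- !comp_assoc. reflexivity.
Qed.

Lemma comul_of_mult : comul_of ∘ mB =
  (mB ⊠ mB) ∘ cast (eq_sym (e4 A T B B B B)) ∘ ((idm B ⊠ br Br B B) ⊠ idm B)
    ∘ cast (e4 A T B B B B) ∘ (comul_of ⊠ comul_of).
Proof.
  destruct (rm_ax _ _ _ _ _ (mo M reg_mod reg_mod)) as [Hm1 Hm2].
  rewrite <- tensor_action_comul_of. apply heq_eq.
  apply (heq_trans _ (act (mo M reg_mod reg_mod) ∘ (act (mo M reg_mod reg_mod) ⊠ idm B) ∘ ((unit_tensor_point ⊠ idm B) ⊠ idm B))).
  - rewrite Hm1. apply heq_sym. rewrite <- !comp_assoc.
    apply (heq_trans _ (act (mo M reg_mod reg_mod) ∘ ((unit_tensor_point ⊠ idm B) ∘ (idm I ⊠ mB)))).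
    + apply heq_comp. 2: apply heq_refl.
      apply (heq_trans _ ((idm _ ⊠ mB) ∘ (unit_tensor_point ⊠ (idm B ⊠ idm B)))).
      * apply heq_comp. apply heq_castl, heq_assoc. apply heq_refl.
      * rewrite <- !thom_comp, thom_id, !comp_idl, !comp_idr. apply heq_refl.
    + rewrite comp_assoc. apply heq_comp. apply heq_unitl. apply act_unit_tensor_point.
  - rewrite <- comp_assoc, <- thom_comp, comp_idl.
    apply heq_comp. apply heq_thom. apply act_unit_tensor_point. apply heq_refl. apply act_heq_tensor_action.
Qed.

Lemma counit_of_unit : counit_of ∘ uB = idm I.
Proof.
  destruct (rm_ax _ _ _ _ _ (mI M)) as [He1 He2].
  apply heq_eq. apply (heq_trans _ (act (mI M) ∘ (idm _ ⊠ uB))).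
  - unfold counit_of. rewrite <- !comp_assoc. apply heq_castl. apply heq_comp. 2: apply heq_refl.
    apply heq_castl, heq_castl. apply heq_sym.
    eapply heq_trans. apply heq_thom. apply (heq_idm eI). apply heq_refl. apply heq_unitl.
  - rewrite He2. eapply heq_trans. apply heq_cast'. apply heq_idm, eI.
Qed.

Lemma comul_of_unit : comul_of ∘ uB = (uB ⊠ uB) ∘ cast (eq_sym (tunitl T I)).
Proof.
  destruct (rm_ax _ _ _ _ _ (mo M reg_mod reg_mod)) as [Hm1 Hm2].
  apply heq_eq. apply (heq_trans _ (act (mo M reg_mod reg_mod) ∘ (idm _ ⊠ uB) ∘ (unit_tensor_point ⊠ idm I))).
  - unfold comul_of. rewrite <- !comp_assoc. apply heq_comp. 2: apply act_tensor_heq.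
    apply (heq_trans _ ((uB ⊠ uB) ⊠ uB)).
    + apply (heq_trans _ (((uB ⊠ uB) ⊠ idm B) ∘ (idm (I ⊗ I) ⊠ uB))).
      * apply heq_comp. 2: apply heq_refl. apply heq_castl. apply heq_sym.
        eapply heq_trans. apply heq_thom. apply (heq_idm (tunitl T I)). apply heq_refl. apply heq_unitl.
      * rewrite <- thom_comp, comp_idl, comp_idr. apply heq_refl.
    + rewrite <- thom_comp, comp_idl, comp_idr. apply heq_thom. apply heq_sym, unit_tensor_point_heq. apply heq_refl.
  - rewrite Hm2. apply heq_castl, heq_castr'.
    eapply heq_trans. apply heq_unitr. apply unit_tensor_point_heq.
Qed.

Lemma counit_of_mult : counit_of ∘ mB = cast (tunitl T I) ∘ (counit_of ⊠ counit_of).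
Proof.
  destruct (rm_ax _ _ _ _ _ (mI M)) as [He1 He2].
  apply heq_eq.
  apply (heq_trans _ (act (mI M) ∘ (act (mI M) ⊠ idm B) ∘ ((unit_point ⊠ idm B) ⊠ idm B))).
  - rewrite He1. apply heq_sym. rewrite <- !comp_assoc. apply heq_comp. 2: apply counit_of_heq.
    apply (heq_trans _ ((idm _ ⊠ mB) ∘ (unit_point ⊠ (idm B ⊠ idm B)))).
    + apply heq_comp. apply heq_castl, heq_assoc. apply heq_refl.
    + rewrite <- thom_comp, thom_id, comp_idl, comp_idr.
      eapply heq_trans. apply heq_thom. apply unit_point_heq. apply heq_refl. apply heq_unitl.
  - rewrite <- comp_assoc, <- thom_comp, comp_idl.
    apply (heq_trans _ (counit_act ∘ (counit_of ⊠ idm B))).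
    + apply heq_comp. 2: apply counit_act_heq. apply heq_thom. 2: apply heq_refl.
      eapply heq_comp_idr. apply heq_thom_id. apply heq_cast'. apply heq_refl. apply counit_of_heq.
    + apply eq_heq. rewrite counit_act_of.
      replace (counit_of ⊠ counit_of) with ((idm I ⊠ counit_of) ∘ (counit_of ⊠ idm B)) by (rewrite <- thom_comp, comp_idl, comp_idr; reflexivity).
      rewrite comp_assoc, (thom_unitl _ T). reflexivity.
Qed.

Lemma bialgebra_of_mon : IsBialgebra A T B mB uB Br comul_of counit_of.
Proof.
  exact (conj comul_of_coassoc (conj comul_of_counitl (conj comul_of_counitr
          (conj comul_of_mult (conj counit_of_unit (conj comul_of_unit counit_of_mult)))))).
Qed.

Lemma mon_of_bialg_of_mon : mon_of_bialg comul_of counit_of bialgebra_of_mon = M.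
Proof.
  apply MonStruct_ext.
  - intros a b. symmetry. apply (RMod_eq (mo M a b) (mo (mon_of_bialg comul_of counit_of bialgebra_of_mon) a b) (eo a b)).
    change (act (mo (mon_of_bialg comul_of counit_of bialgebra_of_mon) a b)) with (tact a b comul_of).
    rewrite <- act_tensor_eq. unfold act_tensor. rewrite <- !comp_assoc, cast_comp, cast_idm, comp_idr. reflexivity.
  - symmetry. apply (RMod_eq (mI M) (mI (mon_of_bialg comul_of counit_of bialgebra_of_mon)) eI).
    change (act (mI (mon_of_bialg comul_of counit_of bialgebra_of_mon))) with (counit_of ∘ cast (tunitl T B)).
    rewrite <- counit_act_of. unfold counit_act. rewrite <- !comp_assoc, cast_comp, cast_idm, comp_idr. reflexivity.
  - intros. simpl. apply heq_sym, strict_thom.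
  - intros. simpl. apply heq_sym, strict_assoc.
  - intros. simpl. apply heq_sym, strict_lunit.
  - intros. simpl. apply heq_sym, strict_runit.
Qed.

End FromMonoidal.

Lemma mon_struct_of_surj (s : ModMonStr A T B mB uB) : exists x, mon_struct_of x = s.
Proof.
  destruct s as [M HM]. pose proof HM as [eo [eI [Hthom [Hassoc [Hlunit Hrunit]]]]].
  assert (strict_thom : forall (a b c d : MC) (f : @hom MC a b) (g : @hom MC c d),
             heq (mmh (mh M f g)) (mmh f ⊠ mmh g)).
  { intros. exists (eo a c), (eo b d). apply Hthom. }
  assert (strict_assoc : forall a b c : MC,
             heq (mmh (malpha M a b c)) (cast (tassoc T (ob_ a) (ob_ b) (ob_ c)))).
  { intros. eexists. eexists. apply Hassoc. }
  assert (strict_lunit : forall a : MC, heq (mmh (mlam M a)) (cast (tunitl T (ob_ a)))).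
  { intros. eexists. exists eq_refl. simpl. rewrite comp_idl. apply Hlunit. }
  assert (strict_runit : forall a : MC, heq (mmh (mrho M a)) (cast (tunitr T (ob_ a)))).
  { intros. eexists. exists eq_refl. simpl. rewrite comp_idl. apply Hrunit. }
  exists (exist _ (comul_of M eo, counit_of M eI)
            (bialgebra_of_mon M eo eI strict_thom strict_assoc strict_lunit strict_runit)).
  apply sig_eq. apply mon_of_bialg_of_mon.
Qed.

End Modules.

Theorem mainTheorem3 (A : Cat) (T : SMC A) (Br : Braiding A T)
  (HI : RegularGenerator (tI T))
  (Hr : forall X : A,
      PreservesColimits (fun a : A => tob T a X) (fun a b (f : hom a b) => thom T f (idm X)))
  (Hl : forall X : A,
      PreservesColimits (fun a : A => tob T X a) (fun a b (f : hom a b) => thom T (idm X) f))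
  (B : A) (mB : hom (tob T B B) B) (uB : hom (tI T) B)
  (HB : IsAlgebra A T B mB uB) :
  exists Phi : BialgStr A T B mB uB Br -> ModMonStr A T B mB uB,
    (forall x y, Phi x = Phi y -> x = y) /\
    (forall s, exists x, Phi x = s) /\
    (forall x, Corresponds A T B mB uB Br (Phi x) x).
Proof.
  exists (mon_struct_of T Br B mB uB HB HI Hr). split; [|split].
  - apply mon_struct_of_inj.
  - apply mon_struct_of_surj.
  - apply mon_struct_of_corresponds.
Qed.
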